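(* There is an absolute constant $C>0$ such that, setting $C_q=C(1-q)^{-4}$, for all $c\ge0$ and $n\ge0$ with $q:=c^2/\chi_n(c)<1$, $$\sup_{|x|\le1}|\psi_{n,c}(x)|\le C_q\,\chi_n(c)^{1/4},\qquad \sup_{|x|\le1}(1-x^2)^{1/4}|\psi_{n,c}(x)|\le C_q .$$
   Context: Fix a bandwidth $c\ge 0$. The prolate spheroidal wave functions (PSWFs) $\psi_{n,c}$, $n\ge0$, are the solutions on $[-1,1]$, bounded as $|x|\to1^-$, of $\frac{d}{dx}\big[(1-x^2)\psi'(x)\big]+(\chi_n(c)-c^2x^2)\psi(x)=0$, where $0\le\chi_0(c)<\chi_1(c)<\cdots$ are the eigenvalues; $n(n+1)\le\chi_n(c)\le n(n+1)+c^2$. They are normalized by $\int_{-1}^1|\psi_{n,c}|^2dx=1$, $\psi_{n,c}$ has the parity of $n$, and $\psi_{n,c}(1)\ge0$. *)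

From Stdlib Require Import Reals Lra List.
Open Scope R_scope.

Definition solves_pswf_ode (c chi : R) (psi : R -> R) : Prop :=
  exists dpsi d2psi : R -> R,
    forall x, -1 < x < 1 ->
      derivable_pt_lim psi x (dpsi x) /\
      derivable_pt_lim dpsi x (d2psi x) /\
      (1 - x^2) * d2psi x - 2 * x * dpsi x + (chi - c^2 * x^2) * psi x = 0.

Definition is_eigenvalue (c chi : R) : Prop :=
  exists psi : R -> R,
    solves_pswf_ode c chi psi /\
    (exists M, forall x, -1 < x < 1 -> Rabs (psi x) <= M) /\
    (exists x, -1 < x < 1 /\ psi x <> 0).

(* chi = chi_n(c): an eigenvalue with exactly n eigenvalues strictly below it. *)
Definition is_chi (c : R) (n : nat) (chi : R) : Prop :=
  is_eigenvalue c chi /\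
  exists l : list R, length l = n /\ NoDup l /\
    (forall y, In y l <-> (is_eigenvalue c y /\ y < chi)).

Definition is_pswf (c : R) (n : nat) (chi : R) (psi : R -> R) : Prop :=
  solves_pswf_ode c chi psi /\
  (forall x, -1 <= x <= 1 -> continuity_pt psi x) /\
  (exists pr : Riemann_integrable (fun x => psi x ^ 2) (-1) 1, RiemannInt pr = 1) /\
  (forall x, -1 <= x <= 1 -> psi (- x) = (-1) ^ n * psi x) /\
  0 <= psi 1.

From Stdlib Require Import Reals Lra List Psatz.
Open Scope R_scope.

(* With u = (1 - t^2) psi' the equation reads u' = - (chi - c^2 t^2) psi, and psi' = O(chi sup|psi|)
   because psi stays bounded at t = 1.  Put dl = 1 - c^2/chi and s = (1 - t^2)(chi - c^2 t^2).
   The amplitude Z = s (psi^2 + u^2/s)^2 is nearly constant away from the turning region: its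
   corrected form Y = Z + s'/(chi - c^2 t^2) (psi^2 + u^2/s) psi u satisfies |Y'| <= k Y with int k <= 1/2 on
   [0, x0], where 1 - x0^2 = K/(chi dl^5).  Hence Z is comparable at all points of [0, x0], and
   integrating (2 chi int psi^2 + psi u)' >= sqrt(chi dl Z) against the unit L^2 mass gives
   Z = O(chi/dl), i.e. psi^4 = O(chi/dl) / s there.  Beyond x0 the energy s psi^2 + u^2 decreases,
   and on the last stretch of length 1/(4 chi) psi cannot double.  When chi dl^5 is bounded, the
   crude estimate sup psi^2 <= 64 chi from the Lipschitz bound and the normalization suffices. *)

Lemma der_eq f x l l' : derivable_pt_lim f x l -> l = l' -> derivable_pt_lim f x l'.
Proof. intros H ->; exact H. Qed.

Lemma der_const k x : derivable_pt_lim (fun _ => k) x 0.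
Proof. exact (derivable_pt_lim_const k x). Qed.

Lemma der_id x : derivable_pt_lim (fun t => t) x 1.
Proof. exact (derivable_pt_lim_id x). Qed.

Lemma der_plus f g x a b : derivable_pt_lim f x a -> derivable_pt_lim g x b ->
  derivable_pt_lim (fun t => f t + g t) x (a + b).
Proof. exact (derivable_pt_lim_plus f g x a b). Qed.

Lemma der_minus f g x a b : derivable_pt_lim f x a -> derivable_pt_lim g x b ->
  derivable_pt_lim (fun t => f t - g t) x (a - b).
Proof. exact (derivable_pt_lim_minus f g x a b). Qed.

Lemma der_mult f g x a b : derivable_pt_lim f x a -> derivable_pt_lim g x b ->
  derivable_pt_lim (fun t => f t * g t) x (a * g x + f x * b).
Proof. exact (derivable_pt_lim_mult f g x a b). Qed.

Lemma der_div f g x a b : derivable_pt_lim f x a -> derivable_pt_lim g x b -> g x <> 0 ->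
  derivable_pt_lim (fun t => f t / g t) x ((a * g x - b * f x) / (g x * g x)).
Proof. exact (derivable_pt_lim_div f g x a b). Qed.

Lemma der_comp f g x a b : derivable_pt_lim f x a -> derivable_pt_lim g (f x) b ->
  derivable_pt_lim (fun t => g (f t)) x (b * a).
Proof. exact (derivable_pt_lim_comp f g x a b). Qed.

Lemma der_sq f x a : derivable_pt_lim f x a ->
  derivable_pt_lim (fun t => f t ^ 2) x (2 * f x * a).
Proof.
  intros Hf. apply der_eq with (a * f x + f x * a); [|ring].
  apply (derivable_pt_lim_ext (fun t => f t * f t)); [intros; ring|].
  exact (der_mult f f x a a Hf Hf).
Qed.

Lemma der_sqrt f x a : derivable_pt_lim f x a -> 0 < f x ->
  derivable_pt_lim (fun t => sqrt (f t)) x (a / (2 * sqrt (f x))).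
Proof.
  intros Hf Hpos. apply der_eq with (/ (2 * sqrt (f x)) * a).
  - apply (der_comp f sqrt); [exact Hf|]. exact (derivable_pt_lim_sqrt _ Hpos).
  - field. apply Rgt_not_eq, sqrt_lt_R0, Hpos.
Qed.

Lemma der_ln f x a : derivable_pt_lim f x a -> 0 < f x ->
  derivable_pt_lim (fun t => ln (f t)) x (a / f x).
Proof.
  intros Hf Hpos. apply der_eq with (/ f x * a).
  - apply (der_comp f ln); [exact Hf|]. exact (derivable_pt_lim_ln _ Hpos).
  - field. lra.
Qed.

Lemma le_of_derive_nonneg f f' a b : a <= b ->
  (forall t, a <= t <= b -> derivable_pt_lim f t (f' t)) ->
  (forall t, a <= t <= b -> 0 <= f' t) -> f a <= f b.
Proof.
  intros Hab Hd Hp. destruct (Req_dec a b) as [->|Hne]; [lra|].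
  destruct (MVT_cor2 f f' a b) as [c [Hc Hcab]]; [lra|exact Hd|].
  assert (0 <= f' c) by (apply Hp; lra). nra.
Qed.

Lemma le_of_derive_nonpos f f' a b : a <= b ->
  (forall t, a <= t <= b -> derivable_pt_lim f t (f' t)) ->
  (forall t, a <= t <= b -> f' t <= 0) -> f b <= f a.
Proof.
  intros Hab Hd Hp. enough (- f a <= - f b) by lra.
  apply (le_of_derive_nonneg (fun t => - f t) (fun t => - f' t)); [exact Hab| |].
  - intros t Ht. exact (derivable_pt_lim_opp f t _ (Hd t Ht)).
  - intros t Ht. specialize (Hp t Ht). lra.
Qed.

Lemma Rabs_sub_le_of_derive_bound f f' a b B : a <= b ->
  (forall t, a < t < b -> derivable_pt_lim f t (f' t)) ->
  (forall t, a < t < b -> Rabs (f' t) <= B) ->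
  (forall t, a <= t <= b -> continuity_pt f t) ->
  Rabs (f b - f a) <= B * (b - a).
Proof.
  intros Hab Hd Hb Hc. destruct (Req_dec a b) as [->|Hne].
  { rewrite Rminus_diag, Rabs_R0. lra. }
  assert (pr1 : forall c, a < c < b -> derivable_pt f c) by (intros c Hc'; exists (f' c); apply Hd; exact Hc').
  assert (pr2 : forall c, a < c < b -> derivable_pt id c) by (intros c _; apply derivable_pt_id).
  destruct (MVT f id a b pr1 pr2) as [c [Hcab HP]]; [lra|exact Hc|
    intros; apply derivable_continuous_pt, derivable_pt_id|].
  rewrite (derive_pt_eq_0 f c (f' c) (pr1 c Hcab) (Hd c Hcab)),
    (derive_pt_eq_0 id c 1 (pr2 c Hcab) (derivable_pt_lim_id c)) in HP.
  unfold id in HP. replace (f b - f a) with ((b - a) * f' c) by lra.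
  rewrite Rabs_mult, Rabs_right by lra. specialize (Hb c Hcab). nra.
Qed.

Lemma Rabs_le_inv a b : Rabs a <= b -> - b <= a <= b.
Proof. unfold Rabs. destruct (Rcase_abs a); lra. Qed.

Lemma Rabs_le_of_sq_le x y : 0 <= y -> x ^ 2 <= y ^ 2 -> Rabs x <= y.
Proof. intros Hy H. rewrite <- (pow2_abs x) in H. pose proof (Rabs_pos x). nra. Qed.

Lemma Rdiv_le_0_compat a b : 0 <= a -> 0 < b -> 0 <= a / b.
Proof. intros. apply Rmult_le_pos; [|left; apply Rinv_0_lt_compat]; assumption. Qed.

Lemma pow_le_one x n : 0 <= x <= 1 -> x ^ n <= 1.
Proof. intros. rewrite <- (pow1 n). apply pow_incr. lra. Qed.

Lemma pow_le_pow_le_one x m n : 0 <= x <= 1 -> (m <= n)%nat -> x ^ n <= x ^ m.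
Proof.
  intros Hx Hmn. replace n with (m + (n - m))%nat by lia. rewrite pow_add.
  pose proof (pow_le_one x (n - m) Hx). pose proof (pow_le x m (proj1 Hx)).
  pose proof (pow_le x (n - m) (proj1 Hx)). nra.
Qed.

Lemma der_two_div_sqrt_one_sub A t : t < 1 ->
  derivable_pt_lim (fun t => 2 * A / sqrt (1 - t)) t (A / ((1 - t) * sqrt (1 - t))).
Proof.
  intros Ht. assert (Hq : 0 < sqrt (1 - t)) by (apply sqrt_lt_R0; lra).
  assert (Hqq : sqrt (1 - t) * sqrt (1 - t) = 1 - t) by (apply sqrt_sqrt; lra).
  eapply der_eq.
  - apply der_div; [apply der_const| |lra].
    apply der_sqrt; [apply der_minus; [apply der_const|apply der_id]|lra].
  - cbv beta. rewrite Hqq. field. split; lra.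
Qed.

(* Gronwall: if |Y'| <= Phi' Y and Phi grows by at most 1/2 on [a, b], then Y varies at most by a
   factor 2, as Y (1 + Phi a - Phi) decreases and Y / (1 + Phi a - Phi) increases. *)
Lemma ratio_le_two_of_log_deriv_bound Y Y' Phi k a b : a <= b ->
  (forall t, a <= t <= b -> derivable_pt_lim Y t (Y' t)) ->
  (forall t, a <= t <= b -> derivable_pt_lim Phi t (k t)) ->
  (forall t, a <= t <= b -> 0 <= Y t /\ Rabs (Y' t) <= k t * Y t) ->
  (forall t, a <= t <= b -> 0 <= k t) ->
  (forall t, a <= t <= b -> 0 <= Phi t - Phi a <= 1/2) ->
  Y b <= 2 * Y a /\ Y a <= 2 * Y b.
Proof.
  intros Hab HY HPhi HYk Hk HP.
  set (g := fun t => 1 + Phi a - Phi t).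
  assert (Hg : forall t, a <= t <= b -> derivable_pt_lim g t (- k t)).
  { intros t Ht. eapply der_eq; [apply der_minus; [apply der_const|apply HPhi, Ht]|]. ring. }
  assert (Hga : g a = 1) by (unfold g; ring).
  assert (Hgb : 1/2 <= g b <= 1) by (pose proof (HP b ltac:(lra)); unfold g; lra).
  assert (HYb : 0 <= Y b) by (apply HYk; lra).
  assert (Hkey : forall t, a <= t <= b -> Rabs (Y' t * g t) <= k t * Y t).
  { intros t Ht. destruct (HYk t Ht) as [HY0 HYd]. pose proof (HP t Ht). pose proof (Hk t Ht).
    rewrite Rabs_mult, (Rabs_right (g t)) by (unfold g; lra).
    assert (Rabs (Y' t) * g t <= k t * Y t * g t) by (apply Rmult_le_compat_r; [unfold g|]; lra).
    assert (k t * Y t * g t <= k t * Y t * 1) by (apply Rmult_le_compat_l; [nra|unfold g; lra]).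
    lra. }
  split.
  - assert (F : Y b * g b <= Y a * g a).
    { apply (le_of_derive_nonpos (fun t => Y t * g t) (fun t => Y' t * g t + Y t * - k t)); [lra| |].
      - intros t Ht. apply der_mult; [apply HY|apply Hg]; exact Ht.
      - intros t Ht. pose proof (Rabs_le_inv _ _ (Hkey t Ht)). lra. }
    rewrite Hga in F. nra.
  - assert (F : Y a / g a <= Y b / g b).
    { apply (le_of_derive_nonneg (fun t => Y t / g t)
        (fun t => (Y' t * g t - - k t * Y t) / (g t * g t))); [lra| |].
      - intros t Ht. assert (0 < g t) by (pose proof (HP t Ht); unfold g; lra).
        apply der_div; [apply HY|apply Hg|]; [exact Ht|exact Ht|lra].
      - intros t Ht. assert (0 < g t) by (pose proof (HP t Ht); unfold g; lra).
        pose proof (Rabs_le_inv _ _ (Hkey t Ht)).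
        apply Rdiv_le_0_compat; [lra|apply Rmult_lt_0_compat; lra]. }
    rewrite Hga, Rdiv_1_r in F.
    assert (Y b / g b <= 2 * Y b).
    { apply Rmult_le_reg_r with (g b); [lra|]. unfold Rdiv.
      rewrite Rmult_assoc, Rinv_l by lra. nra. }
    lra.
Qed.

Definition pswf_ode (c2 chi : R) (psi dpsi d2psi : R -> R) : Prop :=
  forall x, -1 < x < 1 ->
    derivable_pt_lim psi x (dpsi x) /\ derivable_pt_lim dpsi x (d2psi x) /\
    (1 - x^2) * d2psi x - 2 * x * dpsi x + (chi - c2 * x^2) * psi x = 0.

Definition wt (t : R) := 1 - t^2.
Definition pot (c2 chi t : R) := chi - c2 * t^2.
Definition spot (c2 chi t : R) := wt t * pot c2 chi t.
Definition dspot (c2 chi t : R) := -2 * t * pot c2 chi t - 2 * c2 * t * wt t.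
Definition d2spot (c2 chi t : R) := -2 * pot c2 chi t - 2 * c2 * wt t + 8 * c2 * t^2.
Definition hcoef (c2 chi t : R) := dspot c2 chi t / pot c2 chi t.
Definition dhcoef (c2 chi t : R) :=
  (d2spot c2 chi t * pot c2 chi t - dspot c2 chi t * (-2 * c2 * t)) / pot c2 chi t ^ 2.

Definition flux (dpsi : R -> R) (t : R) := wt t * dpsi t.
Definition ampl2 c2 chi (psi dpsi : R -> R) t := psi t ^ 2 + flux dpsi t ^ 2 / spot c2 chi t.
Definition zfun c2 chi (psi dpsi : R -> R) t := spot c2 chi t * ampl2 c2 chi psi dpsi t ^ 2.
Definition yfun c2 chi (psi dpsi : R -> R) t :=
  zfun c2 chi psi dpsi t + hcoef c2 chi t * ampl2 c2 chi psi dpsi t * (psi t * flux dpsi t).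
Definition dyfun c2 chi (psi dpsi : R -> R) t :=
  psi t * flux dpsi t * (dhcoef c2 chi t * ampl2 c2 chi psi dpsi t
    - hcoef c2 chi t * dspot c2 chi t * flux dpsi t ^ 2 / spot c2 chi t ^ 2).
Definition energy c2 chi (psi dpsi : R -> R) t := spot c2 chi t * psi t ^ 2 + flux dpsi t ^ 2.

Lemma wt_pos t : -1 < t < 1 -> 0 < wt t.
Proof. intros. unfold wt. nra. Qed.

Lemma pot_pos c2 chi t : 0 <= c2 < chi -> -1 <= t <= 1 -> 0 < pot c2 chi t.
Proof. intros. unfold pot. assert (t^2 <= 1) by nra. nra. Qed.

Lemma ampl2_nonneg c2 chi psi dpsi t : 0 < spot c2 chi t -> 0 <= ampl2 c2 chi psi dpsi t.
Proof.
  intros Hs. unfold ampl2. pose proof (pow2_ge_0 (psi t)).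
  assert (0 <= flux dpsi t ^ 2 / spot c2 chi t) by (apply Rdiv_le_0_compat; [apply pow2_ge_0|exact Hs]).
  lra.
Qed.

Lemma energy_eq c2 chi psi dpsi t : spot c2 chi t <> 0 ->
  energy c2 chi psi dpsi t = spot c2 chi t * ampl2 c2 chi psi dpsi t.
Proof. intros Hs. unfold energy, ampl2. field. exact Hs. Qed.

Lemma spot_mul_pow4_le_zfun c2 chi psi dpsi t : 0 < spot c2 chi t ->
  spot c2 chi t * psi t ^ 4 <= zfun c2 chi psi dpsi t.
Proof.
  intros Hs. unfold zfun. apply Rmult_le_compat_l; [lra|].
  replace (psi t ^ 4) with ((psi t ^ 2) ^ 2) by ring. apply pow_incr.
  pose proof (pow2_ge_0 (psi t)). split; [lra|]. unfold ampl2.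
  assert (0 <= flux dpsi t ^ 2 / spot c2 chi t) by (apply Rdiv_le_0_compat; [apply pow2_ge_0|lra]).
  lra.
Qed.

Lemma der_wt t : derivable_pt_lim wt t (-2 * t).
Proof.
  unfold wt. eapply der_eq; [apply der_minus; [apply der_const|apply der_sq, der_id]|]. cbv beta; ring.
Qed.

Lemma der_pot c2 chi t : derivable_pt_lim (pot c2 chi) t (-2 * c2 * t).
Proof.
  unfold pot. eapply der_eq.
  - apply der_minus; [apply der_const|]. apply der_mult; [apply der_const|apply der_sq, der_id].
  - cbv beta; ring.
Qed.

Lemma der_spot c2 chi t : derivable_pt_lim (spot c2 chi) t (dspot c2 chi t).
Proof.
  unfold spot. eapply der_eq; [apply der_mult; [apply der_wt|apply der_pot]|].
  unfold dspot. ring.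
Qed.

Lemma der_dspot c2 chi t : derivable_pt_lim (dspot c2 chi) t (d2spot c2 chi t).
Proof.
  unfold dspot. eapply der_eq.
  - apply der_minus; apply der_mult; [apply der_mult; [apply der_const|apply der_id]|apply der_pot|
      apply der_mult; [apply der_const|apply der_id]|apply der_wt].
  - unfold d2spot, pot, wt. ring.
Qed.

Lemma der_hcoef c2 chi t : 0 <= c2 < chi -> -1 < t < 1 ->
  derivable_pt_lim (hcoef c2 chi) t (dhcoef c2 chi t).
Proof.
  intros Hc Ht. pose proof (pot_pos c2 chi t Hc ltac:(lra)).
  unfold hcoef. eapply der_eq; [apply der_div; [apply der_dspot|apply der_pot|lra]|].
  unfold dhcoef. field. lra.
Qed.

Lemma pswf_ode_opp c2 chi psi dpsi d2psi : pswf_ode c2 chi psi dpsi d2psi ->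
  pswf_ode c2 chi (fun x => - psi x) (fun x => - dpsi x) (fun x => - d2psi x).
Proof.
  intros H x Hx. destruct (H x Hx) as [H1 [H2 H3]]. split; [|split].
  - exact (derivable_pt_lim_opp psi x _ H1).
  - exact (derivable_pt_lim_opp dpsi x _ H2).
  - lra.
Qed.

Section Derivatives.

Variables (c2 chi : R) (psi dpsi d2psi : R -> R).
Hypothesis ode : pswf_ode c2 chi psi dpsi d2psi.
Hypothesis c2_bounds : 0 <= c2 < chi.

Lemma der_psi t : -1 < t < 1 -> derivable_pt_lim psi t (dpsi t).
Proof. intros Ht. apply (ode t Ht). Qed.

Lemma der_flux t : -1 < t < 1 -> derivable_pt_lim (flux dpsi) t (- pot c2 chi t * psi t).
Proof.
  intros Ht. destruct (ode t Ht) as [_ [H2 H3]]. unfold flux.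
  eapply der_eq; [apply der_mult; [apply der_wt|exact H2]|]. unfold wt, pot in *. lra.
Qed.

Lemma der_psi_flux t : -1 < t < 1 ->
  derivable_pt_lim (fun t => psi t * flux dpsi t) t
    (dpsi t * flux dpsi t - pot c2 chi t * psi t ^ 2).
Proof.
  intros Ht. eapply der_eq; [apply der_mult; [apply der_psi|apply der_flux]; exact Ht|]. ring.
Qed.

Lemma der_energy t : -1 < t < 1 ->
  derivable_pt_lim (energy c2 chi psi dpsi) t (dspot c2 chi t * psi t ^ 2).
Proof.
  intros Ht. unfold energy. eapply der_eq.
  - apply der_plus; [apply der_mult; [apply der_spot|apply der_sq, der_psi, Ht]|].
    apply der_sq, der_flux, Ht.
  - unfold spot, flux. ring.
Qed.

Lemma der_ampl2 t : -1 < t < 1 ->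
  derivable_pt_lim (ampl2 c2 chi psi dpsi) t
    (- dspot c2 chi t * flux dpsi t ^ 2 / spot c2 chi t ^ 2).
Proof.
  intros Ht. pose proof (wt_pos t Ht). pose proof (pot_pos c2 chi t c2_bounds ltac:(lra)).
  assert (spot c2 chi t <> 0) by (unfold spot; nra).
  unfold ampl2. eapply der_eq.
  - apply der_plus; [apply der_sq, der_psi, Ht|].
    apply der_div; [apply der_sq, der_flux, Ht|apply der_spot|assumption].
  - unfold spot, flux, dspot in *. field. split; lra.
Qed.

Lemma der_yfun t : -1 < t < 1 ->
  derivable_pt_lim (yfun c2 chi psi dpsi) t (dyfun c2 chi psi dpsi t).
Proof.
  intros Ht. pose proof (wt_pos t Ht). pose proof (pot_pos c2 chi t c2_bounds ltac:(lra)).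
  unfold yfun, zfun. eapply der_eq.
  - apply der_plus; [apply der_mult; [apply der_spot|apply der_sq, der_ampl2, Ht]|].
    apply der_mult; [apply der_mult; [apply der_hcoef; assumption|apply der_ampl2, Ht]|].
    apply der_psi_flux, Ht.
  - unfold dyfun, ampl2, hcoef, spot, flux, dspot in *. field. split; lra.
Qed.

End Derivatives.

Section FluxBound.

Variables (c2 chi : R) (psi dpsi d2psi : R -> R).
Hypothesis ode : pswf_ode c2 chi psi dpsi d2psi.
Hypothesis c2_bounds : 0 <= c2 < chi.

Lemma flux_lipschitz t y B : 0 <= t <= y -> y < 1 ->
  (forall z, t <= z <= y -> Rabs (psi z) <= B) ->
  Rabs (flux dpsi y - flux dpsi t) <= chi * B * (y - t).
Proof.
  intros Ht Hy HB.
  apply (Rabs_sub_le_of_derive_bound (flux dpsi) (fun z => - pot c2 chi z * psi z)); [lra| | |].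
  - intros z Hz. apply (der_flux c2 chi psi dpsi d2psi ode). lra.
  - intros z Hz. assert (z^2 <= 1) by nra. assert (0 <= pot c2 chi z <= chi) by (unfold pot; split; nra).
    rewrite Ropp_mult_distr_l_reverse, Rabs_Ropp, Rabs_mult, (Rabs_right (pot _ _ _)) by lra.
    assert (Rabs (psi z) <= B) by (apply HB; lra). pose proof (Rabs_pos (psi z)). nra.
  - intros z Hz. apply derivable_continuous_pt. exists (- pot c2 chi z * psi z).
    apply (der_flux c2 chi psi dpsi d2psi ode). lra.
Qed.

(* If u(t) were larger, u would stay above u(t)/2 near 1, so psi' >= u(t)/(4(1-z)) there and
   psi would grow like a logarithm, contradicting |psi| <= B. *)
Lemma flux_le_of_bounded t B : 0 <= t < 1 -> (forall z, t <= z < 1 -> Rabs (psi z) <= B) ->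
  flux dpsi t <= 2 * chi * B * (1 - t).
Proof.
  intros Ht HB.
  assert (HB0 : 0 <= B) by (pose proof (HB t ltac:(lra)); pose proof (Rabs_pos (psi t)); lra).
  destruct (Rle_lt_dec (flux dpsi t) (2 * chi * B * (1 - t))) as [|Ha]; [assumption|exfalso].
  set (a := flux dpsi t) in *.
  assert (0 <= 2 * chi * B * (1 - t)) by (repeat apply Rmult_le_pos; lra).
  assert (Hu : forall z, t <= z < 1 -> a / 2 < flux dpsi z).
  { intros z Hz.
    pose proof (flux_lipschitz t z B ltac:(lra) ltac:(lra) ltac:(intros; apply HB; lra)) as Hl.
    apply Rabs_le_inv in Hl. fold a in Hl.
    assert (chi * B * (z - t) <= chi * B * (1 - t)) by (apply Rmult_le_compat_l; nra).
    lra. }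
  set (k := (8 * B + 4) / a).
  assert (Hk : 0 < k) by (apply Rdiv_lt_0_compat; lra).
  set (y := 1 - (1 - t) * exp (- k)).
  assert (He : 0 < exp (- k) < 1).
  { split; [apply exp_pos|]. rewrite <- exp_0. apply exp_increasing. lra. }
  assert (Hy : t < y < 1) by (unfold y; nra).
  assert (Hln : ln (1 - y) = ln (1 - t) - k).
  { unfold y. replace (1 - (1 - (1 - t) * exp (- k))) with ((1 - t) * exp (- k)) by ring.
    rewrite ln_mult, ln_exp by lra. ring. }
  assert (Hmono : psi t + a / 4 * ln (1 - t) <= psi y + a / 4 * ln (1 - y)).
  { apply (le_of_derive_nonneg (fun z => psi z + a / 4 * ln (1 - z))
             (fun z => dpsi z + a / 4 * (-1 / (1 - z)))); [lra| |].
    - intros z Hz. eapply der_eq.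
      + apply der_plus; [apply (der_psi c2 chi psi dpsi d2psi ode); lra|].
        apply der_mult; [apply der_const|].
        apply der_ln; [apply der_minus; [apply der_const|apply der_id]|lra].
      + cbv beta. field. lra.
    - intros z Hz. pose proof (Hu z ltac:(lra)) as Hu1. unfold flux, wt in Hu1.
      assert (Hp2 : 0 < 1 - z^2) by nra.
      assert (0 < dpsi z) by nra.
      assert (dpsi z * (2 * (1 - z)) >= a / 2) by nra.
      assert (a / (4 * (1 - z)) <= dpsi z).
      { apply Rmult_le_reg_r with (4 * (1 - z)); [lra|].
        unfold Rdiv. rewrite Rmult_assoc, Rinv_l by lra. lra. }
      replace (a / 4 * (-1 / (1 - z))) with (- (a / (4 * (1 - z)))) by (field; lra).
      lra. }
  rewrite Hln in Hmono.
  assert (Hk2 : a / 4 * k = 2 * B + 1) by (unfold k; field; lra).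
  pose proof (Rabs_le_inv _ _ (HB t ltac:(lra))). pose proof (Rabs_le_inv _ _ (HB y ltac:(lra))).
  lra.
Qed.

End FluxBound.

Section PsiBounds.

Variables (c2 chi : R) (psi dpsi d2psi : R -> R).
Hypothesis ode : pswf_ode c2 chi psi dpsi d2psi.
Hypothesis c2_bounds : 0 <= c2 < chi.
Hypothesis psi_cont : forall x, 0 <= x <= 1 -> continuity_pt psi x.

Lemma Rabs_flux_le t B : 0 <= t < 1 -> (forall z, t <= z < 1 -> Rabs (psi z) <= B) ->
  Rabs (flux dpsi t) <= 2 * chi * B * (1 - t).
Proof.
  intros Ht HB. apply Rabs_le. split.
  - enough (flux (fun x => - dpsi x) t <= 2 * chi * B * (1 - t)) by (unfold flux in *; lra).
    apply (flux_le_of_bounded c2 chi _ _ _ (pswf_ode_opp _ _ _ _ _ ode) c2_bounds t B Ht).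
    intros z Hz. rewrite Rabs_Ropp. auto.
  - exact (flux_le_of_bounded c2 chi psi dpsi d2psi ode c2_bounds t B Ht HB).
Qed.

Lemma Rabs_dpsi_le t B : 0 <= t < 1 -> (forall z, t <= z < 1 -> Rabs (psi z) <= B) ->
  Rabs (dpsi t) <= 2 * chi * B.
Proof.
  intros Ht HB. pose proof (Rabs_flux_le t B Ht HB) as Hu. unfold flux, wt in Hu.
  rewrite Rabs_mult, (Rabs_right (1 - t^2)) in Hu by nra.
  assert (0 <= B) by (pose proof (HB t ltac:(lra)); pose proof (Rabs_pos (psi t)); lra).
  pose proof (Rabs_pos (dpsi t)). assert (1 - t <= 1 - t^2) by nra. nra.
Qed.

Lemma psi_lipschitz_on a b B : 0 <= a <= b -> b <= 1 ->
  (forall x, a <= x <= 1 -> Rabs (psi x) <= B) ->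
  Rabs (psi b - psi a) <= 2 * chi * B * (b - a).
Proof.
  intros Hab Hb HB. apply (Rabs_sub_le_of_derive_bound psi dpsi); [lra| | |].
  - intros t Ht. apply (der_psi c2 chi psi dpsi d2psi ode). lra.
  - intros t Ht. apply Rabs_dpsi_le; [lra|]. intros; apply HB; lra.
  - intros t Ht. apply psi_cont. lra.
Qed.

Lemma psi_lipschitz a b M : 0 <= a <= 1 -> 0 <= b <= 1 ->
  (forall x, 0 <= x <= 1 -> Rabs (psi x) <= M) ->
  Rabs (psi b - psi a) <= 2 * chi * M * Rabs (b - a).
Proof.
  intros Ha Hb HM. destruct (Rle_lt_dec a b).
  - rewrite (Rabs_right (b - a)) by lra.
    apply psi_lipschitz_on; [lra|lra|]. intros; apply HM; lra.
  - rewrite <- Rabs_Ropp, Ropp_minus_distr, <- (Rabs_Ropp (b - a)), Ropp_minus_distr,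
      (Rabs_right (a - b)) by lra.
    apply psi_lipschitz_on; [lra|lra|]. intros; apply HM; lra.
Qed.

(* |psi'| <= 2 chi sup|psi|, so over a stretch of length 1/(4 chi) psi loses at most half its
   maximum. *)
Lemma Rabs_psi_le_near_one x1 : 0 <= x1 < 1 -> 2 * chi * (1 - x1) <= 1/2 ->
  forall y, x1 <= y <= 1 -> Rabs (psi y) <= 2 * Rabs (psi x1).
Proof.
  intros Hx1 Hcx y Hy.
  destruct (continuity_ab_maj (fun x => Rabs (psi x)) x1 1) as [m1 [Hm1 Hm1b]]; [lra| |].
  { intros x Hx. apply (continuity_pt_comp psi Rabs); [apply psi_cont; lra|apply Rcontinuity_abs]. }
  set (M1 := Rabs (psi m1)) in *.
  assert (L : Rabs (psi m1 - psi x1) <= 2 * chi * M1 * (m1 - x1))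
    by (apply psi_lipschitz_on; [lra|lra|exact Hm1]).
  assert (HM10 : 0 <= M1) by apply Rabs_pos.
  assert (2 * chi * M1 * (m1 - x1) <= M1 / 2).
  { assert (2 * chi * M1 * (m1 - x1) <= 2 * chi * M1 * (1 - x1))
      by (apply Rmult_le_compat_l; [apply Rmult_le_pos|]; lra).
    assert (M1 * (2 * chi * (1 - x1)) <= M1 * (1/2)) by (apply Rmult_le_compat_l; lra).
    lra. }
  pose proof (Rabs_triang_inv (psi m1) (psi x1)). pose proof (Hm1 y Hy). fold M1 in H0. lra.
Qed.

(* For an even solution with chi < 1/4, psi stays above half its maximum on [0,1]; integrating
   u' = - pot * psi from u(0) = 0 then forces u(y) far below the bound of [Rabs_flux_le]. *)
Lemma chi_ge_quarter_of_even_max tm M : dpsi 0 = 0 ->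
  (forall x, 0 <= x <= 1 -> Rabs (psi x) <= M) ->
  0 <= tm <= 1 -> psi tm = M -> 0 < M -> 1/4 <= chi.
Proof.
  intros Hd0 HM Htm Hpm HM0.
  destruct (Rle_lt_dec (1/4) chi) as [|Hchi]; [assumption|exfalso].
  assert (Hpos : forall t, 0 <= t <= 1 -> M / 2 <= psi t).
  { intros t Ht. pose proof (Rabs_le_inv _ _ (psi_lipschitz tm t M Htm Ht HM)) as L.
    assert (Rabs (t - tm) <= 1) by (apply Rabs_le; lra).
    assert (2 * chi * M * Rabs (t - tm) <= 2 * chi * M * 1)
      by (apply Rmult_le_compat_l; [repeat apply Rmult_le_pos|]; lra).
    nra. }
  set (d := chi - c2).
  set (y := 1 - d / chi / 8).
  assert (Hd : 0 < d) by (unfold d; lra).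
  assert (Hdl : d / chi <= 1).
  { apply Rmult_le_reg_r with chi; [lra|]. unfold Rdiv, d. rewrite Rmult_assoc, Rinv_l; lra. }
  assert (Hy : 7/8 <= y < 1) by (unfold y; assert (0 < d / chi) by (apply Rdiv_lt_0_compat; lra); lra).
  assert (Hm : flux dpsi y + d * (M / 2) * y <= flux dpsi 0 + d * (M / 2) * 0).
  { apply (le_of_derive_nonpos (fun t => flux dpsi t + d * (M / 2) * t)
      (fun t => - pot c2 chi t * psi t + d * (M / 2))); [lra| |].
    - intros t Ht. eapply der_eq.
      + apply der_plus; [apply (der_flux c2 chi psi dpsi d2psi ode); lra|].
        apply der_mult; [apply der_const|apply der_id].
      + cbv beta. ring.
    - intros t Ht. assert (t^2 <= 1) by nra. assert (d <= pot c2 chi t) by (unfold d, pot; nra).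
      pose proof (Hpos t ltac:(lra)).
      assert (d * (M / 2) <= pot c2 chi t * psi t) by (apply Rmult_le_compat; lra). lra. }
  unfold flux at 2 in Hm. rewrite Hd0 in Hm.
  pose proof (Rabs_le_inv _ _ (Rabs_flux_le y M ltac:(lra) ltac:(intros; apply HM; lra))) as L.
  assert (2 * chi * M * (1 - y) = d * M / 4) by (unfold y; field; lra).
  assert (0 < d * M * (y - 1/2)) by (apply Rmult_lt_0_compat; [apply Rmult_lt_0_compat|]; lra).
  nra.
Qed.

End PsiBounds.

Definition mass_primitive (psi P : R -> R) : Prop :=
  (forall x, -1 <= x <= 1 -> derivable_pt_lim P x (psi x ^ 2)) /\ P (-1) = 0 /\ P 1 = 1.

Lemma mass_primitive_exists psi :
  (forall x, -1 <= x <= 1 -> continuity_pt psi x) ->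
  (exists pr : Riemann_integrable (fun x => psi x ^ 2) (-1) 1, RiemannInt pr = 1) ->
  exists P, mass_primitive psi P.
Proof.
  intros Hc [pr Hpr].
  assert (h : -1 <= 1) by lra.
  assert (C0 : forall x, -1 <= x <= 1 -> continuity_pt (fun y => psi y ^ 2) x).
  { intros x Hx. apply (continuity_pt_locally_ext (mult_fct psi psi) _ 1); [lra| |].
    - intros y _. unfold mult_fct. ring.
    - apply continuity_pt_mult; apply Hc, Hx. }
  exists (primitive h (FTC_P1 h C0)). split; [|split].
  - intros x Hx. exact (RiemannInt_P28 h C0 Hx).
  - unfold primitive. destruct (Rle_dec (-1) (-1)); [|lra]. destruct (Rle_dec (-1) 1); [|lra].
    apply RiemannInt_P9.
  - unfold primitive. destruct (Rle_dec (-1) 1); [|lra]. destruct (Rle_dec 1 1); [|lra].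
    rewrite <- Hpr. apply RiemannInt_P5.
Qed.

Section Mass.

Variables psi P : R -> R.
Hypothesis mass : mass_primitive psi P.

Lemma mass_primitive_le a b : -1 <= a <= b -> b <= 1 -> P a <= P b.
Proof.
  intros Ha Hb. destruct mass as [HP _].
  apply (le_of_derive_nonneg P (fun x => psi x ^ 2)); [lra| |intros; apply pow2_ge_0].
  intros; apply HP; lra.
Qed.

Lemma mass_primitive_sub_le_one a b : -1 <= a <= b -> b <= 1 -> P b - P a <= 1.
Proof.
  intros Ha Hb. destruct mass as [_ [H0 H1]].
  pose proof (mass_primitive_le (-1) a ltac:(lra) ltac:(lra)).
  pose proof (mass_primitive_le b 1 ltac:(lra) ltac:(lra)). lra.
Qed.

Lemma mass_lower_bound_on a b m : -1 <= a <= b -> b <= 1 ->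
  (forall t, a <= t <= b -> m <= psi t ^ 2) -> m * (b - a) <= P b - P a.
Proof.
  intros Ha Hb Hm. destruct mass as [HP _].
  enough (P a - m * a <= P b - m * b) by lra.
  apply (le_of_derive_nonneg (fun t => P t - m * t) (fun t => psi t ^ 2 - m)); [lra| |].
  - intros t Ht. eapply der_eq.
    + apply der_minus; [apply HP; lra|apply der_mult; [apply der_const|apply der_id]].
    + cbv beta. ring.
  - intros t Ht. pose proof (Hm t Ht). lra.
Qed.

Lemma one_le_two_sup_sq M : (forall x, -1 <= x <= 1 -> Rabs (psi x) <= M) -> 1 <= 2 * M ^ 2.
Proof.
  intros HM. destruct mass as [HP [H0 H1]].
  enough (P 1 - M ^ 2 * 1 <= P (-1) - M ^ 2 * (-1)) by lra.
  apply (le_of_derive_nonpos (fun t => P t - M ^ 2 * t) (fun t => psi t ^ 2 - M ^ 2)); [lra| |].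
  - intros t Ht. eapply der_eq.
    + apply der_minus; [apply HP; lra|apply der_mult; [apply der_const|apply der_id]].
    + cbv beta. ring.
  - intros t Ht. pose proof (pow_maj_Rabs M (psi t) 2 (HM t Ht)). lra.
Qed.

End Mass.

Lemma dpsi0_of_even c2 chi psi dpsi d2psi : pswf_ode c2 chi psi dpsi d2psi ->
  (forall x, -1 <= x <= 1 -> psi (- x) = psi x) -> dpsi 0 = 0.
Proof.
  intros H Hp.
  assert (D1 : derivable_pt_lim (fun x => psi (- x)) 0 (dpsi 0 * -1)).
  { apply (der_comp (fun x => - x) psi); [apply (derivable_pt_lim_opp id), der_id|].
    rewrite Ropp_0. apply (der_psi c2 chi psi dpsi d2psi H). lra. }
  assert (D2 : derivable_pt_lim psi 0 (dpsi 0 * -1)).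
  { apply (derivable_pt_lim_locally_ext (fun x => psi (- x)) psi 0 (-1) 1); [lra| |exact D1].
    intros z Hz. apply Hp. lra. }
  pose proof (uniqueness_limite psi 0 _ _ (der_psi c2 chi psi dpsi d2psi H 0 ltac:(lra)) D2).
  lra.
Qed.

Lemma Rabs_max_on_unit_interval psi :
  (forall x, -1 <= x <= 1 -> continuity_pt psi x) ->
  (forall x, -1 <= x <= 1 -> Rabs (psi (- x)) = Rabs (psi x)) ->
  exists tm, 0 <= tm <= 1 /\ forall x, -1 <= x <= 1 -> Rabs (psi x) <= Rabs (psi tm).
Proof.
  intros Hc Hp.
  destruct (continuity_ab_maj (fun x => Rabs (psi x)) (-1) 1) as [m [Hm Hmab]]; [lra| |].
  { intros x Hx. apply (continuity_pt_comp psi Rabs); [apply Hc, Hx|apply Rcontinuity_abs]. }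
  destruct (Rle_lt_dec 0 m).
  - exists m. split; [lra|exact Hm].
  - exists (- m). split; [lra|]. rewrite Hp by lra. exact Hm.
Qed.

Section Maximum.

Variables (c2 chi : R) (psi dpsi d2psi : R -> R) (eps tm : R).
Hypothesis ode : pswf_ode c2 chi psi dpsi d2psi.
Hypothesis c2_bounds : 0 <= c2 < chi.
Hypothesis psi_cont : forall x, 0 <= x <= 1 -> continuity_pt psi x.
Hypothesis eps_sign : eps = 1 \/ eps = -1.
Hypothesis parity : forall x, -1 <= x <= 1 -> psi (- x) = eps * psi x.
Hypothesis tm_range : 0 <= tm <= 1.
Hypothesis tm_max : forall x, 0 <= x <= 1 -> Rabs (psi x) <= Rabs (psi tm).

(* Odd case: psi 0 = 0, and the Lipschitz bound from 0 to tm forces chi >= 1/2.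
   Even case: psi' 0 = 0, and [chi_ge_quarter_of_even_max] applies to psi or to - psi. *)
Lemma chi_ge_quarter : 0 < Rabs (psi tm) -> 1/4 <= chi.
Proof.
  intros HM0. set (M := Rabs (psi tm)) in *.
  destruct eps_sign as [He|He]; subst eps.
  - assert (Hd0 : dpsi 0 = 0).
    { apply (dpsi0_of_even c2 chi psi dpsi d2psi ode). intros x Hx. rewrite parity; auto; ring. }
    destruct (Rle_lt_dec 0 (psi tm)).
    + apply (chi_ge_quarter_of_even_max c2 chi psi dpsi d2psi ode c2_bounds psi_cont tm M Hd0
               tm_max tm_range); [|exact HM0].
      unfold M. rewrite Rabs_right; lra.
    + assert (cont_opp : forall x, 0 <= x <= 1 -> continuity_pt (fun x => - psi x) x)
        by (intros x Hx; apply (continuity_pt_opp psi), psi_cont, Hx).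
      apply (chi_ge_quarter_of_even_max c2 chi _ _ _ (pswf_ode_opp _ _ _ _ _ ode) c2_bounds
               cont_opp tm M); [| |exact tm_range| |exact HM0].
      * cbv beta. rewrite Hd0. ring.
      * intros x Hx. rewrite Rabs_Ropp. apply tm_max, Hx.
      * unfold M. rewrite Rabs_left; lra.
  - assert (H0 : psi 0 = 0) by (pose proof (parity 0 ltac:(lra)) as H0; rewrite Ropp_0 in H0; lra).
    pose proof (psi_lipschitz c2 chi psi dpsi d2psi ode c2_bounds psi_cont 0 tm M
      ltac:(lra) tm_range tm_max) as L.
    rewrite H0, !Rminus_0_r, (Rabs_right tm) in L by lra. fold M in L.
    destruct (Rle_lt_dec (1/4) chi) as [|Hlt]; [assumption|].
    assert (2 * chi * M * tm <= 2 * chi * M * 1)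
      by (apply Rmult_le_compat_l; [repeat apply Rmult_le_pos|]; lra).
    nra.
Qed.

(* Near the maximum psi^2 >= M^2/4 on an interval of length 1/(16 chi), which carries mass <= 1. *)
Lemma sup_sq_le P : mass_primitive psi P -> 1/4 <= chi -> Rabs (psi tm) ^ 2 <= 64 * chi.
Proof.
  intros mass Hchi. set (M := Rabs (psi tm)) in *.
  assert (HM0 : 0 <= M) by apply Rabs_pos.
  set (l := 1 / (8 * chi)).
  assert (Hl : 0 < l <= 1/2).
  { unfold l. split; [apply Rdiv_lt_0_compat; lra|].
    apply Rmult_le_reg_r with (8 * chi); [lra|]. unfold Rdiv. rewrite Rmult_assoc, Rinv_l; lra. }
  assert (Hcl : 2 * chi * M * l = M / 4) by (unfold l; field; lra).
  assert (Hnear : forall t, 0 <= t <= 1 -> Rabs (t - tm) <= l -> M ^ 2 / 4 <= psi t ^ 2).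
  { intros t Ht Hd.
    pose proof (psi_lipschitz c2 chi psi dpsi d2psi ode c2_bounds psi_cont tm t M
      tm_range Ht tm_max) as L.
    assert (2 * chi * M * Rabs (t - tm) <= 2 * chi * M * l)
      by (apply Rmult_le_compat_l; [repeat apply Rmult_le_pos|]; lra).
    pose proof (Rabs_triang_inv (psi tm) (psi t)).
    rewrite <- Rabs_Ropp, Ropp_minus_distr in L. fold M in H0.
    rewrite <- (pow2_abs (psi t)). nra. }
  assert (Hint : exists a, 0 <= a /\ a + l / 2 < 1 /\
      forall t, a <= t <= a + l / 2 -> Rabs (t - tm) <= l).
  { destruct (Rle_lt_dec (1/2) tm).
    - exists (tm - l). repeat split; try lra. intros t Ht. apply Rabs_le; lra.
    - exists tm. repeat split; try lra. intros t Ht. apply Rabs_le; lra. }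
  destruct Hint as [a [Ha [Hb Hin]]].
  pose proof (mass_lower_bound_on psi P mass a (a + l / 2) (M ^ 2 / 4) ltac:(lra) ltac:(lra)
    (fun t Ht => Hnear t ltac:(lra) (Hin t Ht))).
  pose proof (mass_primitive_sub_le_one psi P mass a (a + l / 2) ltac:(lra) ltac:(lra)).
  assert (M ^ 2 / (64 * chi) <= 1).
  { replace (M ^ 2 / (64 * chi)) with (M ^ 2 / 4 * (a + l / 2 - a)) by (unfold l; field; lra).
    lra. }
  apply Rmult_le_reg_r with (/ (64 * chi)); [apply Rinv_0_lt_compat; lra|].
  rewrite Rinv_r by lra. exact H1.
Qed.

End Maximum.

Lemma sq_mul_le_ampl2 s a u : 0 < s -> (a * u) ^ 2 <= s * (a ^ 2 + u ^ 2 / s) ^ 2 / 4.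
Proof.
  intros Hs.
  replace (s * (a ^ 2 + u ^ 2 / s) ^ 2 / 4) with ((s * a ^ 2 + u ^ 2) ^ 2 / (4 * s)) by (field; lra).
  apply Rmult_le_reg_r with (4 * s); [lra|]. unfold Rdiv. rewrite Rmult_assoc, Rinv_l by lra.
  pose proof (pow2_ge_0 (s * a ^ 2 - u ^ 2)). nra.
Qed.

Lemma Rabs_cross_term_le s a u h : 0 < s -> 4 * h ^ 2 <= s ->
  Rabs (h * (a ^ 2 + u ^ 2 / s) * (a * u)) <= s * (a ^ 2 + u ^ 2 / s) ^ 2 / 4.
Proof.
  intros Hs Hh. set (Q := a ^ 2 + u ^ 2 / s).
  assert (HQ : 0 <= Q) by (unfold Q; assert (0 <= u^2/s) by (apply Rdiv_le_0_compat; nra); nra).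
  pose proof (sq_mul_le_ampl2 s a u Hs) as H1. fold Q in H1.
  apply Rabs_le_of_sq_le; [apply Rmult_le_pos; [apply Rmult_le_pos|]; nra|].
  replace ((h * Q * (a * u)) ^ 2) with (h^2 * Q^2 * (a * u)^2) by ring.
  apply Rle_trans with ((s / 4) * Q ^ 2 * (s * Q ^ 2 / 4)).
  - apply Rmult_le_compat; [nra|nra|apply Rmult_le_compat_r; nra|exact H1].
  - right. field.
Qed.

Lemma sq_deriv_term_le s a u hd hsd al be : 0 < s -> Rabs hd <= al -> 0 <= hsd <= be * s -> 0 <= be ->
  (a * u * (hd * (a ^ 2 + u ^ 2 / s) - hsd * u ^ 2 / s ^ 2)) ^ 2 <=
  (al + be) ^ 2 * (s * (a ^ 2 + u ^ 2 / s) ^ 2) ^ 2 / (4 * s).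
Proof.
  intros Hs Hal Hb Hbe. set (Q := a ^ 2 + u ^ 2 / s).
  assert (HU : 0 <= u ^ 2 / s) by (apply Rdiv_le_0_compat; nra).
  assert (HUQ : u ^ 2 / s <= Q) by (unfold Q; nra).
  pose proof (sq_mul_le_ampl2 s a u Hs) as H1. fold Q in H1.
  assert (Hal0 : 0 <= al) by (pose proof (Rabs_pos hd); lra).
  assert (B1 : Rabs (hd * Q - hsd * u ^ 2 / s ^ 2) <= (al + be) * Q).
  { eapply Rle_trans; [apply Rabs_triang|]. rewrite Rabs_Ropp, Rabs_mult, (Rabs_right Q) by lra.
    replace (hsd * u ^ 2 / s ^ 2) with ((hsd / s) * (u ^ 2 / s)) by (field; lra).
    rewrite Rabs_mult, (Rabs_right (u^2/s)) by lra.
    assert (Rabs (hsd / s) <= be).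
    { rewrite Rabs_right by (apply Rle_ge, Rdiv_le_0_compat; lra).
      apply Rmult_le_reg_r with s; [lra|]. unfold Rdiv. rewrite Rmult_assoc, Rinv_l by lra. lra. }
    pose proof (Rabs_pos (hsd/s)).
    assert (Rabs hd * Q <= al * Q) by (apply Rmult_le_compat_r; lra).
    assert (Rabs (hsd / s) * (u ^ 2 / s) <= be * Q) by (apply Rmult_le_compat; lra).
    lra. }
  assert (B2 : (hd * Q - hsd * u ^ 2 / s ^ 2) ^ 2 <= ((al + be) * Q) ^ 2).
  { rewrite <- (pow2_abs (hd * Q - hsd * u ^ 2 / s ^ 2)). apply pow_incr. split; [apply Rabs_pos|auto]. }
  replace ((a * u * (hd * Q - hsd * u ^ 2 / s ^ 2)) ^ 2)
    with ((a * u) ^ 2 * (hd * Q - hsd * u ^ 2 / s ^ 2) ^ 2) by ring.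
  apply Rle_trans with ((s * Q ^ 2 / 4) * ((al + be) * Q) ^ 2).
  - apply Rmult_le_compat; try apply pow2_ge_0; auto.
  - right. field. lra.
Qed.

Lemma sq_deriv_mul_weight_le D Z Y s p dl chi w : 0 < p <= 1 -> 0 < dl <= 1 -> 0 < chi ->
  p * chi * dl <= s -> 0 <= w <= p -> 0 <= Z -> 3 / 4 * Z <= Y ->
  D ^ 2 <= (20 / dl ^ 2 + 16 / (dl ^ 2 * p)) ^ 2 * Z ^ 2 / (4 * s) ->
  D ^ 2 * w ^ 3 * (chi * dl ^ 5) <= 576 * Y ^ 2.
Proof.
  intros Hp Hdl Hchi Hs Hw HZ HY HD.
  assert (Hs0 : 0 < s) by (assert (0 < p * chi * dl) by (repeat apply Rmult_lt_0_compat; lra); lra).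
  assert (Hd2 : 0 < dl ^ 2) by (apply pow_lt; lra).
  assert (E1 : 20 / dl ^ 2 + 16 / (dl ^ 2 * p) <= 36 / (dl ^ 2 * p)).
  { replace (36 / (dl ^ 2 * p)) with (20 / (dl^2 * p) + 16 / (dl ^ 2 * p)) by (field; lra).
    apply Rplus_le_compat_r. unfold Rdiv. apply Rmult_le_compat_l; [lra|].
    apply Rinv_le_contravar; [apply Rmult_lt_0_compat; lra|].
    rewrite <- (Rmult_1_r (dl^2)) at 2. apply Rmult_le_compat_l; lra. }
  assert (E0 : 0 <= 20 / dl ^ 2 + 16 / (dl ^ 2 * p)).
  { apply Rplus_le_le_0_compat; apply Rdiv_le_0_compat; try lra. apply Rmult_lt_0_compat; lra. }
  assert (E2 : D ^ 2 <= (36 / (dl ^ 2 * p)) ^ 2 * Z ^ 2 / (4 * s)).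
  { eapply Rle_trans; [exact HD|]. unfold Rdiv. apply Rmult_le_compat_r.
    - left; apply Rinv_0_lt_compat; lra.
    - apply Rmult_le_compat_r; [apply pow2_ge_0|]. apply pow_incr. lra. }
  assert (E3 : D ^ 2 * (s * dl ^ 4 * p ^ 2) <= 324 * Z ^ 2).
  { replace (324 * Z ^ 2) with ((36 / (dl ^ 2 * p)) ^ 2 * Z ^ 2 / (4 * s) * (s * dl ^ 4 * p ^ 2))
      by (field; lra).
    apply Rmult_le_compat_r; [|exact E2]. assert (0 < dl^4) by (apply pow_lt; lra).
    apply Rmult_le_pos; [apply Rmult_le_pos|apply pow2_ge_0]; lra. }
  assert (E4 : w ^ 3 * (chi * dl) <= s * p ^ 2).
  { assert (w ^ 3 <= p ^ 3) by (apply pow_incr; lra).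
    apply Rle_trans with (p ^ 3 * (chi * dl)); [apply Rmult_le_compat_r; nra|].
    replace (p ^ 3 * (chi * dl)) with ((p * chi * dl) * p ^ 2) by ring.
    apply Rmult_le_compat_r; [apply pow2_ge_0|lra]. }
  assert (E5 : 9 / 16 * Z ^ 2 <= Y ^ 2).
  { replace (9/16 * Z^2) with ((3/4 * Z)^2) by field. apply pow_incr. nra. }
  assert (Hsp : 0 < s * p ^ 2) by (apply Rmult_lt_0_compat; nra).
  assert (0 <= w ^ 3) by (apply pow_le; lra).
  apply Rmult_le_reg_r with (s * p ^ 2); [exact Hsp|].
  apply Rle_trans with (324 * Z ^ 2 * (w ^ 3 * (chi * dl))).
  - replace (D ^ 2 * w ^ 3 * (chi * dl ^ 5) * (s * p ^ 2)) with
      ((D ^ 2 * (s * dl ^ 4 * p ^ 2)) * (w ^ 3 * (chi * dl))) by ring.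
    apply Rmult_le_compat_r; [apply Rmult_le_pos; nra|exact E3].
  - apply Rle_trans with (324 * Z ^ 2 * (s * p ^ 2)).
    + apply Rmult_le_compat_l; [pose proof (pow2_ge_0 Z); lra|exact E4].
    + apply Rmult_le_compat_r; lra.
Qed.

Section Regime.

Variables c2 chi dl : R.
Hypothesis chi_pos : 0 < chi.
Hypothesis dl_range : 0 < dl <= 1.
Hypothesis c2_def : c2 = chi * (1 - dl).

Lemma c2_bounds_of_regime : 0 <= c2 < chi.
Proof. subst. split; nra. Qed.

Lemma pot_bounds t : 0 <= t < 1 -> chi * dl <= pot c2 chi t <= chi.
Proof.
  intros Ht. assert (0 <= t ^ 2 < 1) by nra. assert (0 <= chi * (1 - dl)) by nra.
  unfold pot. subst. split; nra.
Qed.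

Lemma chi_le_pot_div_dl t : 0 <= t < 1 -> chi <= pot c2 chi t / dl.
Proof.
  intros Ht. pose proof (pot_bounds t Ht).
  apply Rmult_le_reg_r with dl; [lra|]. unfold Rdiv. rewrite Rmult_assoc, Rinv_l; lra.
Qed.

Lemma dspot_bounds t : 0 <= t < 1 -> -4 * chi <= dspot c2 chi t <= 0.
Proof.
  intros Ht. pose proof (pot_bounds t Ht). pose proof c2_bounds_of_regime.
  assert (0 < wt t <= 1) by (unfold wt; nra).
  unfold dspot. assert (0 <= c2 * wt t <= chi) by nra.
  assert (0 <= t * pot c2 chi t <= chi) by nra.
  assert (0 <= t * (c2 * wt t) <= chi) by nra. nra.
Qed.

Lemma Rabs_dhcoef_le t : 0 <= t < 1 -> Rabs (dhcoef c2 chi t) <= 20 / dl ^ 2.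
Proof.
  intros Ht. pose proof (pot_bounds t Ht) as Hr. pose proof (dspot_bounds t Ht).
  pose proof (chi_le_pot_div_dl t Ht). pose proof c2_bounds_of_regime.
  assert (0 <= t ^ 2 < 1) by nra. assert (0 < wt t <= 1) by (unfold wt; nra).
  assert (Hsdd : Rabs (d2spot c2 chi t) <= 12 * chi).
  { unfold d2spot. apply Rabs_le. assert (0 <= c2 * wt t <= chi) by nra.
    assert (0 <= c2 * t^2 <= chi) by nra. nra. }
  assert (Hrp : 0 < pot c2 chi t) by nra.
  unfold dhcoef.
  replace ((d2spot c2 chi t * pot c2 chi t - dspot c2 chi t * (-2 * c2 * t)) / pot c2 chi t ^ 2)
    with (d2spot c2 chi t / pot c2 chi t + (2 * c2 * t) * dspot c2 chi t / pot c2 chi t ^ 2)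
    by (field; lra).
  eapply Rle_trans; [apply Rabs_triang|].
  assert (Rabs (d2spot c2 chi t / pot c2 chi t) <= 12 / dl).
  { unfold Rdiv. rewrite Rabs_mult, Rabs_inv, (Rabs_right (pot _ _ _)) by lra.
    apply Rmult_le_reg_r with (pot c2 chi t); [lra|]. rewrite Rmult_assoc, Rinv_l by lra.
    replace (12 * / dl * pot c2 chi t) with (12 * (pot c2 chi t / dl)) by (field; lra).
    lra. }
  assert (Rabs (2 * c2 * t * dspot c2 chi t / pot c2 chi t ^ 2) <= 8 / dl ^ 2).
  { unfold Rdiv. rewrite Rabs_mult, Rabs_inv, (Rabs_right (pot _ _ _ ^ 2)) by (apply Rle_ge, pow2_ge_0).
    apply Rmult_le_reg_r with (pot c2 chi t ^ 2); [nra|]. rewrite Rmult_assoc, Rinv_l by nra.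
    apply Rle_trans with (8 * chi ^ 2).
    - rewrite Rabs_mult, (Rabs_right (2 * c2 * t)) by nra.
      assert (Rabs (dspot c2 chi t) <= 4 * chi) by (apply Rabs_le; lra).
      assert (2 * c2 * t <= 2 * chi) by nra. pose proof (Rabs_pos (dspot c2 chi t)). nra.
    - replace (8 * / dl ^ 2 * pot c2 chi t ^ 2) with (8 * (pot c2 chi t / dl) ^ 2) by (field; lra).
      nra. }
  assert (12 / dl <= 12 / dl ^ 2).
  { unfold Rdiv. apply Rmult_le_compat_l; [lra|]. apply Rinv_le_contravar; nra. }
  replace (20 / dl ^ 2) with (12 / dl ^ 2 + 8 / dl ^ 2) by (field; lra). lra.
Qed.

Lemma hcoef_dspot_bounds t : 0 <= t < 1 -> 0 <= hcoef c2 chi t * dspot c2 chi t <= 16 * chi / dl.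
Proof.
  intros Ht. pose proof (pot_bounds t Ht). pose proof (dspot_bounds t Ht).
  pose proof (chi_le_pot_div_dl t Ht).
  assert (Hrp : 0 < pot c2 chi t) by nra.
  unfold hcoef.
  replace (dspot c2 chi t / pot c2 chi t * dspot c2 chi t) with (dspot c2 chi t ^ 2 / pot c2 chi t)
    by (field; lra).
  split; [apply Rdiv_le_0_compat; [apply pow2_ge_0|lra]|].
  apply Rmult_le_reg_r with (pot c2 chi t); [lra|]. unfold Rdiv. rewrite Rmult_assoc, Rinv_l by lra.
  apply Rle_trans with (16 * chi ^ 2); [nra|].
  replace (16 * chi * / dl * pot c2 chi t) with (16 * chi * (pot c2 chi t / dl)) by (field; lra).
  nra.
Qed.

Lemma four_hcoef_sq_le_spot t : 0 <= t < 1 -> 64 <= chi * wt t * dl ^ 5 ->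
  4 * hcoef c2 chi t ^ 2 <= spot c2 chi t.
Proof.
  intros Ht HK. pose proof (pot_bounds t Ht) as Hr. pose proof (dspot_bounds t Ht).
  pose proof (chi_le_pot_div_dl t Ht).
  assert (Hp : 0 < wt t <= 1) by (unfold wt; nra).
  assert (Hrp : 0 < pot c2 chi t) by nra.
  unfold hcoef, spot.
  assert (H2 : 4 * (dspot c2 chi t / pot c2 chi t) ^ 2 <= 64 / dl ^ 2).
  { replace (4 * (dspot c2 chi t / pot c2 chi t) ^ 2) with (4 * dspot c2 chi t ^ 2 / pot c2 chi t ^ 2)
      by (field; lra).
    apply Rmult_le_reg_r with (pot c2 chi t ^ 2); [nra|]. unfold Rdiv.
    rewrite Rmult_assoc, Rinv_l by nra.
    replace (64 * / dl ^ 2 * pot c2 chi t ^ 2) with (64 * (pot c2 chi t / dl) ^ 2) by (field; lra).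
    nra. }
  assert (H3 : 64 / dl ^ 2 <= wt t * (chi * dl)).
  { apply Rmult_le_reg_r with (dl ^ 2); [nra|]. unfold Rdiv. rewrite Rmult_assoc, Rinv_l by nra.
    pose proof (pow_le_pow_le_one dl 3 5 ltac:(lra) ltac:(lia)).
    assert (0 <= chi * wt t) by nra. nra. }
  assert (wt t * (chi * dl) <= wt t * pot c2 chi t) by (apply Rmult_le_compat_l; lra).
  lra.
Qed.

Variables psi dpsi d2psi : R -> R.

(* Where [4 h^2 <= s] the correction term of [yfun] is at most a quarter of [zfun]. *)
Lemma yfun_comparable t : 0 <= t < 1 -> 64 <= chi * wt t * dl ^ 5 ->
  0 <= zfun c2 chi psi dpsi t /\
  3 / 4 * zfun c2 chi psi dpsi t <= yfun c2 chi psi dpsi t <= 5 / 4 * zfun c2 chi psi dpsi t.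
Proof.
  intros Ht HK. pose proof (four_hcoef_sq_le_spot t Ht HK) as Hh. pose proof (pot_bounds t Ht).
  assert (Hp : 0 < wt t <= 1) by (unfold wt; nra).
  assert (Hs : 0 < spot c2 chi t) by (unfold spot; apply Rmult_lt_0_compat; nra).
  pose proof (Rabs_le_inv _ _ (Rabs_cross_term_le _ (psi t) (flux dpsi t) _ Hs Hh)).
  unfold yfun, zfun, ampl2. split; [apply Rmult_le_pos; [lra|apply pow2_ge_0]|lra].
Qed.

Lemma sq_dyfun_le t : 0 <= t < 1 -> 64 <= chi * wt t * dl ^ 5 ->
  dyfun c2 chi psi dpsi t ^ 2 * (1 - t) ^ 3 * (chi * dl ^ 5) <= 576 * yfun c2 chi psi dpsi t ^ 2.
Proof.
  intros Ht HK.
  destruct (yfun_comparable t Ht HK) as [HZ0 [HY1 HY2]].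
  pose proof (pot_bounds t Ht). pose proof (chi_le_pot_div_dl t Ht).
  pose proof (hcoef_dspot_bounds t Ht) as Hhs.
  assert (Hp : 0 < wt t <= 1) by (unfold wt; nra).
  assert (Hs : 0 < spot c2 chi t) by (unfold spot; apply Rmult_lt_0_compat; nra).
  set (be := 16 / (dl ^ 2 * wt t)).
  assert (Hbe : 0 <= be) by (apply Rdiv_le_0_compat; [lra|]; apply Rmult_lt_0_compat; nra).
  assert (Hhs2 : 0 <= hcoef c2 chi t * dspot c2 chi t <= be * spot c2 chi t).
  { split; [lra|]. apply Rle_trans with (16 * chi / dl); [lra|].
    unfold be, spot.
    replace (16 / (dl ^ 2 * wt t) * (wt t * pot c2 chi t)) with (16 * (pot c2 chi t / dl) / dl)
      by (field; lra).
    unfold Rdiv. apply Rmult_le_compat_r; [left; apply Rinv_0_lt_compat; lra|lra]. }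
  pose proof (sq_deriv_term_le _ (psi t) (flux dpsi t) _ _ _ be Hs (Rabs_dhcoef_le t Ht) Hhs2 Hbe) as HD.
  apply (sq_deriv_mul_weight_le _ (zfun c2 chi psi dpsi t) _ (spot c2 chi t) (wt t) dl chi);
    try lra.
  - unfold spot. replace (wt t * chi * dl) with (wt t * (chi * dl)) by ring.
    apply Rmult_le_compat_l; lra.
  - split; [lra|]. unfold wt. nra.
  - exact HD.
Qed.


Definition Kcut := 20000.
Definition xcut := sqrt (1 - Kcut / (chi * dl ^ 5)).

Hypothesis large : 2 * Kcut <= chi * dl ^ 5.

Lemma xcut_facts :
  7/10 <= xcut < 1 /\ wt xcut = Kcut / (chi * dl ^ 5) /\ Kcut / (chi * dl ^ 5) / 2 <= 1 - xcut.
Proof.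
  assert (Hc5 : 0 < chi * dl ^ 5) by (unfold Kcut in large; lra).
  set (p0 := Kcut / (chi * dl ^ 5)).
  assert (Hp0 : 0 < p0 <= 1/2).
  { unfold p0, Kcut. split; [apply Rdiv_lt_0_compat; lra|].
    apply Rmult_le_reg_r with (chi * dl ^ 5); [lra|].
    unfold Rdiv. rewrite Rmult_assoc, Rinv_l; unfold Kcut in large; lra. }
  unfold xcut. fold p0.
  assert (Hsq : sqrt (1 - p0) * sqrt (1 - p0) = 1 - p0) by (apply sqrt_sqrt; lra).
  pose proof (sqrt_pos (1 - p0)).
  split; [split; nra|split].
  - unfold wt. replace (sqrt (1 - p0) ^ 2) with (sqrt (1 - p0) * sqrt (1 - p0)) by ring.
    rewrite Hsq. ring.
  - nra.
Qed.

Lemma wt_ge_on_xcut t : 0 <= t <= xcut -> Kcut <= chi * wt t * dl ^ 5.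
Proof.
  intros Ht. destruct xcut_facts as [Hx [Hpx _]].
  assert (Hc5 : 0 < chi * dl ^ 5) by (unfold Kcut in large; lra).
  assert (wt xcut <= wt t) by (unfold wt; nra). rewrite Hpx in H.
  replace (chi * wt t * dl ^ 5) with (wt t * (chi * dl ^ 5)) by ring.
  replace Kcut with (Kcut / (chi * dl ^ 5) * (chi * dl ^ 5)) at 1 by (field; lra).
  apply Rmult_le_compat_r; lra.
Qed.

Lemma yfun_comparable_on_xcut t : 0 <= t <= xcut ->
  0 <= zfun c2 chi psi dpsi t /\
  3 / 4 * zfun c2 chi psi dpsi t <= yfun c2 chi psi dpsi t <= 5 / 4 * zfun c2 chi psi dpsi t.
Proof.
  intros Ht. destruct xcut_facts as [Hx _]. pose proof (wt_ge_on_xcut t Ht).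
  apply yfun_comparable; [lra|unfold Kcut in *; lra].
Qed.

Lemma Rabs_dyfun_le t : 0 <= t <= xcut ->
  Rabs (dyfun c2 chi psi dpsi t)
  <= 24 / sqrt (chi * dl ^ 5) / ((1 - t) * sqrt (1 - t)) * yfun c2 chi psi dpsi t.
Proof.
  intros Ht. destruct xcut_facts as [Hx _]. pose proof (wt_ge_on_xcut t Ht).
  pose proof (sq_dyfun_le t ltac:(lra) ltac:(unfold Kcut in *; lra)) as HD.
  destruct (yfun_comparable_on_xcut t Ht) as [HZ [HY1 _]].
  set (D := dyfun c2 chi psi dpsi t) in *. set (Y := yfun c2 chi psi dpsi t) in *.
  assert (Hc5 : 0 < chi * dl ^ 5) by (unfold Kcut in large; lra).
  assert (Hsq5 : sqrt (chi * dl ^ 5) * sqrt (chi * dl ^ 5) = chi * dl ^ 5) by (apply sqrt_sqrt; lra).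
  assert (Hsq5p : 0 < sqrt (chi * dl ^ 5)) by (apply sqrt_lt_R0; lra).
  assert (Hq : 0 < sqrt (1 - t)) by (apply sqrt_lt_R0; lra).
  assert (Hqq : sqrt (1 - t) * sqrt (1 - t) = 1 - t) by (apply sqrt_sqrt; lra).
  assert (Hw3 : 0 < (1 - t) ^ 3 * (chi * dl ^ 5)) by (apply Rmult_lt_0_compat; [apply pow_lt|]; lra).
  apply Rabs_le_of_sq_le.
  - apply Rmult_le_pos; [|lra].
    apply Rdiv_le_0_compat; [apply Rdiv_le_0_compat; lra|apply Rmult_lt_0_compat; lra].
  - replace ((24 / sqrt (chi * dl ^ 5) / ((1 - t) * sqrt (1 - t)) * Y) ^ 2)
      with (576 * Y ^ 2 / ((1 - t) ^ 3 * (chi * dl ^ 5))).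
    + apply Rmult_le_reg_r with ((1 - t) ^ 3 * (chi * dl ^ 5)); [exact Hw3|].
      unfold Rdiv. rewrite Rmult_assoc, Rinv_l by lra. lra.
    + set (q5 := sqrt (chi * dl ^ 5)) in *. set (q := sqrt (1 - t)) in *.
      rewrite <- Hsq5. replace ((1 - t) ^ 3) with ((1 - t) * (q * q) * (1 - t)) by (rewrite Hqq; ring).
      field. split; lra.
Qed.

Hypothesis ode : pswf_ode c2 chi psi dpsi d2psi.

Lemma yfun_ratio_le_two a b : 0 <= a <= b -> b <= xcut ->
  yfun c2 chi psi dpsi b <= 2 * yfun c2 chi psi dpsi a /\
  yfun c2 chi psi dpsi a <= 2 * yfun c2 chi psi dpsi b.
Proof.
  intros Hab Hb. destruct xcut_facts as [Hx [_ Hx1]].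
  assert (Hc5 : 0 < chi * dl ^ 5) by (unfold Kcut in large; lra).
  set (A := 24 / sqrt (chi * dl ^ 5)).
  assert (HA : 0 < A) by (apply Rdiv_lt_0_compat; [lra|apply sqrt_lt_R0; lra]).
  set (Phi := fun t => 2 * A / sqrt (1 - t)).
  assert (HPmono : forall u v, u <= v < 1 -> Phi u <= Phi v).
  { intros u v Huv. unfold Phi, Rdiv. apply Rmult_le_compat_l; [lra|].
    apply Rinv_le_contravar; [apply sqrt_lt_R0; lra|apply sqrt_le_1_alt; lra]. }
  assert (HPpos : forall t, t < 1 -> 0 <= Phi t).
  { intros t Ht. apply Rdiv_le_0_compat; [lra|apply sqrt_lt_R0; lra]. }
  (* 16 A^2 = 9216 / (chi dl^5) <= 1 - xcut, hence Phi xcut = 2 A / sqrt (1 - xcut) <= 1/2. *)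
  assert (HPx : Phi xcut <= 1/2).
  { assert (Hq : 0 < sqrt (1 - xcut)) by (apply sqrt_lt_R0; lra).
    assert (HAA : A * A = 576 / (chi * dl ^ 5)).
    { unfold A, Rdiv. rewrite !Rmult_assoc, (Rmult_comm (/ sqrt _)), Rmult_assoc, <- Rinv_mult,
        sqrt_sqrt by lra. field. lra. }
    assert (16 * (A * A) <= 1 - xcut).
    { rewrite HAA. eapply Rle_trans; [|exact Hx1]. unfold Kcut.
      apply Rmult_le_reg_r with (chi * dl ^ 5); [lra|]. unfold Rdiv.
      replace (16 * (576 * / (chi * dl ^ 5)) * (chi * dl ^ 5)) with 9216 by (field; lra).
      replace (20000 * / (chi * dl ^ 5) * / 2 * (chi * dl ^ 5)) with 10000 by (field; lra). lra. }
    assert (4 * A <= sqrt (1 - xcut)).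
    { apply Rsqr_incr_0_var; [|lra]. unfold Rsqr. rewrite sqrt_sqrt by lra. lra. }
    unfold Phi. apply Rmult_le_reg_r with (sqrt (1 - xcut)); [lra|]. unfold Rdiv.
    rewrite Rmult_assoc, Rinv_l by lra. lra. }
  apply (ratio_le_two_of_log_deriv_bound (yfun c2 chi psi dpsi) (dyfun c2 chi psi dpsi) Phi
    (fun t => A / ((1 - t) * sqrt (1 - t)))); [lra| | | | |].
  - intros t Ht. apply (der_yfun c2 chi psi dpsi d2psi ode c2_bounds_of_regime). lra.
  - intros t Ht. apply der_two_div_sqrt_one_sub. lra.
  - intros t Ht. split; [|apply Rabs_dyfun_le; lra].
    destruct (yfun_comparable_on_xcut t ltac:(lra)). lra.
  - intros t Ht. apply Rdiv_le_0_compat; [lra|].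
    apply Rmult_lt_0_compat; [lra|apply sqrt_lt_R0; lra].
  - intros t Ht. pose proof (HPmono a t ltac:(lra)). pose proof (HPmono t xcut ltac:(lra)).
    pose proof (HPpos a ltac:(lra)). lra.
Qed.

Lemma zfun_ratio_le t1 t2 : 0 <= t1 <= xcut -> 0 <= t2 <= xcut ->
  zfun c2 chi psi dpsi t1 <= 10 / 3 * zfun c2 chi psi dpsi t2.
Proof.
  intros H1 H2.
  assert (Y12 : yfun c2 chi psi dpsi t1 <= 2 * yfun c2 chi psi dpsi t2).
  { destruct (Rle_lt_dec t1 t2); [apply (yfun_ratio_le_two t1 t2)|apply (yfun_ratio_le_two t2 t1)];
      lra. }
  destruct (yfun_comparable_on_xcut t1 H1) as [_ [A1 _]].
  destruct (yfun_comparable_on_xcut t2 H2) as [_ [_ A2]]. lra.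
Qed.

Lemma pot_mul_ampl2 y : -1 < y < 1 ->
  pot c2 chi y * ampl2 c2 chi psi dpsi y = pot c2 chi y * psi y ^ 2 + dpsi y * flux dpsi y.
Proof.
  intros Hy. pose proof (wt_pos y Hy). pose proof (pot_pos c2 chi y c2_bounds_of_regime ltac:(lra)).
  unfold ampl2, flux, spot. field. split; lra.
Qed.

Lemma sq_psi_flux_le_zfun y t : 0 <= y <= xcut -> 0 <= t <= xcut ->
  (psi y * flux dpsi y) ^ 2 <= zfun c2 chi psi dpsi t.
Proof.
  intros Hy Ht. destruct xcut_facts as [Hx _].
  pose proof (wt_pos y ltac:(lra)). pose proof (pot_bounds y ltac:(lra)).
  assert (Hs : 0 < spot c2 chi y) by (unfold spot; apply Rmult_lt_0_compat; nra).
  pose proof (sq_mul_le_ampl2 _ (psi y) (flux dpsi y) Hs).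
  pose proof (zfun_ratio_le y t Hy Ht). destruct (yfun_comparable_on_xcut t Ht).
  unfold zfun, ampl2 in *. lra.
Qed.

Lemma zfun_le_sq_pot_ampl2 y t : 0 <= y <= xcut -> 0 <= t <= xcut ->
  3 / 10 * (chi * dl) * zfun c2 chi psi dpsi t <= (pot c2 chi y * ampl2 c2 chi psi dpsi y) ^ 2.
Proof.
  intros Hy Ht. destruct xcut_facts as [Hx _].
  assert (Hp : 0 < wt y <= 1) by (unfold wt; nra). pose proof (pot_bounds y ltac:(lra)).
  pose proof (zfun_ratio_le t y Ht Hy).
  set (Q := ampl2 c2 chi psi dpsi y) in *.
  apply Rle_trans with (chi * dl * zfun c2 chi psi dpsi y).
  - replace (3 / 10 * (chi * dl) * zfun c2 chi psi dpsi t)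
      with ((chi * dl) * (3 / 10 * zfun c2 chi psi dpsi t)) by ring.
    apply Rmult_le_compat_l; nra.
  - unfold zfun, spot. fold Q. pose proof (pow2_ge_0 Q).
    replace ((pot c2 chi y * Q) ^ 2) with (pot c2 chi y * (pot c2 chi y * Q ^ 2)) by ring.
    replace (chi * dl * (wt y * pot c2 chi y * Q ^ 2))
      with (chi * dl * wt y * (pot c2 chi y * Q ^ 2)) by ring.
    assert (0 < chi * dl) by nra.
    assert (chi * dl * wt y <= chi * dl * 1) by (apply Rmult_le_compat_l; lra).
    apply Rmult_le_compat_r; nra.
Qed.

Variable P : R -> R.
Hypothesis mass : mass_primitive psi P.

(* The derivative of 2 chi P + psi u - k y is (2 chi - 2 pot) psi^2 + pot * ampl2 - k. *)
Lemma le_increment_of_le_pot_ampl2 k :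
  (forall y, 0 <= y <= xcut -> k <= pot c2 chi y * ampl2 c2 chi psi dpsi y) ->
  k * xcut <= 2 * chi * (P xcut - P 0) + psi xcut * flux dpsi xcut - psi 0 * flux dpsi 0.
Proof.
  intros Hk. destruct xcut_facts as [Hx _]. destruct mass as [HP _].
  enough (2 * chi * P 0 + psi 0 * flux dpsi 0 - k * 0
          <= 2 * chi * P xcut + psi xcut * flux dpsi xcut - k * xcut) by lra.
  apply (le_of_derive_nonneg (fun y => 2 * chi * P y + psi y * flux dpsi y - k * y)
    (fun y => 2 * chi * psi y ^ 2 + (dpsi y * flux dpsi y - pot c2 chi y * psi y ^ 2) - k)); [lra| |].
  - intros y Hy. eapply der_eq.
    + apply der_minus; [apply der_plus|apply der_mult; [apply der_const|apply der_id]].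
      * apply der_mult; [apply der_const|apply HP; lra].
      * apply (der_psi_flux c2 chi psi dpsi d2psi ode). lra.
    + cbv beta. ring.
  - intros y Hy. pose proof (pot_bounds y ltac:(lra)). pose proof (pot_mul_ampl2 y ltac:(lra)).
    pose proof (Hk y Hy). pose proof (pow2_ge_0 (psi y)).
    assert (pot c2 chi y * psi y ^ 2 <= chi * psi y ^ 2) by (apply Rmult_le_compat_r; lra).
    lra.
Qed.

(* Apply [le_increment_of_le_pot_ampl2] with k = sqrt (3/10 chi dl Z(t)); the left side is
   at least (7/10) k and the right side at most 2 chi + 2 sqrt Z(t). *)
Lemma zfun_le t : 0 <= t <= xcut -> zfun c2 chi psi dpsi t <= 40 * chi / dl.
Proof.
  intros Ht. destruct xcut_facts as [Hx _].
  assert (Hcd : 40000 <= chi * dl).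
  { pose proof (pow_le_pow_le_one dl 1 5 ltac:(lra) ltac:(lia)).
    assert (chi * dl ^ 5 <= chi * dl ^ 1) by (apply Rmult_le_compat_l; lra).
    unfold Kcut in large. rewrite pow_1 in *. lra. }
  set (Zt := zfun c2 chi psi dpsi t) in *.
  assert (HZt : 0 <= Zt) by (apply (yfun_comparable_on_xcut t Ht)).
  set (w := sqrt Zt). assert (Hw : w * w = Zt) by (apply sqrt_sqrt; lra).
  assert (Hw0 : 0 <= w) by apply sqrt_pos.
  set (v := sqrt (3 / 10 * (chi * dl))).
  assert (Hv : v * v = 3 / 10 * (chi * dl)) by (apply sqrt_sqrt; lra).
  assert (Hv100 : 100 <= v).
  { apply Rsqr_incr_0_var; [|apply sqrt_pos]. unfold Rsqr. lra. }
  assert (Hpu : forall y, 0 <= y <= xcut -> Rabs (psi y * flux dpsi y) <= w).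
  { intros y Hy. apply Rabs_le_of_sq_le; [lra|].
    replace (w ^ 2) with Zt by (rewrite <- Hw; ring). exact (sq_psi_flux_le_zfun y t Hy Ht). }
  assert (HG : v * w * xcut
               <= 2 * chi * (P xcut - P 0) + psi xcut * flux dpsi xcut - psi 0 * flux dpsi 0).
  { apply le_increment_of_le_pot_ampl2. intros y Hy. pose proof (pot_bounds y ltac:(lra)).
    apply Rsqr_incr_0_var.
    - unfold Rsqr. replace (v * w * (v * w)) with ((v * v) * (w * w)) by ring. rewrite Hv, Hw.
      eapply Rle_trans; [apply (zfun_le_sq_pot_ampl2 y t Hy Ht)|]. right; ring.
    - apply Rmult_le_pos; [nra|]. apply ampl2_nonneg.
      unfold spot. apply Rmult_lt_0_compat; [apply wt_pos|]; nra. }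
  pose proof (mass_primitive_sub_le_one psi P mass 0 xcut ltac:(lra) ltac:(lra)).
  pose proof (Rabs_le_inv _ _ (Hpu 0 ltac:(lra))). pose proof (Rabs_le_inv _ _ (Hpu xcut ltac:(lra))).
  assert (Hk1 : v * w * xcut <= 2 * chi + 2 * w).
  { assert (2 * chi * (P xcut - P 0) <= 2 * chi * 1) by (apply Rmult_le_compat_l; lra). lra. }
  assert (Hk2 : 68 / 100 * v * w <= 2 * chi).
  { assert (v * w * (7/10) <= v * w * xcut) by (apply Rmult_le_compat_l; [apply Rmult_le_pos|]; lra).
    assert (100 * w <= v * w) by (apply Rmult_le_compat_r; lra). lra. }
  assert (Hk3 : (68 / 100) ^ 2 * (v * v) * (w * w) <= 4 * chi ^ 2).
  { replace ((68 / 100) ^ 2 * (v * v) * (w * w)) with ((68 / 100 * v * w) ^ 2) by ring.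
    replace (4 * chi ^ 2) with ((2 * chi) ^ 2) by ring. apply pow_incr. split; [|lra].
    apply Rmult_le_pos; [apply Rmult_le_pos|]; lra. }
  rewrite Hv, Hw in Hk3.
  apply Rmult_le_reg_r with ((68 / 100) ^ 2 * (3 / 10 * (chi * dl))); [nra|].
  replace (40 * chi / dl * ((68 / 100) ^ 2 * (3 / 10 * (chi * dl))))
    with (40 * (68/100)^2 * (3/10) * chi ^ 2) by (field; lra).
  nra.
Qed.

Lemma psi_pow4_le_interior y : 0 <= y <= xcut ->
  psi y ^ 4 * dl ^ 16 <= 10000 ^ 4 * chi /\ wt y * psi y ^ 4 * dl ^ 16 <= 10000 ^ 4.
Proof.
  intros Hy. destruct xcut_facts as [Hx _].
  pose proof (zfun_le y Hy) as HZ. pose proof (wt_ge_on_xcut y Hy) as HK.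
  pose proof (pot_bounds y ltac:(lra)).
  assert (Hp : 0 < wt y <= 1) by (unfold wt; nra).
  assert (Hs : 0 < spot c2 chi y) by (unfold spot; apply Rmult_lt_0_compat; nra).
  assert (H4 : 0 <= psi y ^ 4) by (replace (psi y ^ 4) with ((psi y ^ 2) ^ 2) by ring; apply pow2_ge_0).
  pose proof (Rle_trans _ _ _ (spot_mul_pow4_le_zfun c2 chi psi dpsi y Hs) HZ) as HZs.
  assert (Hsw : wt y * (chi * dl) <= spot c2 chi y) by (unfold spot; apply Rmult_le_compat_l; lra).
  assert (Hd : 0 < dl) by lra.
  assert (Hd16 : dl ^ 16 <= 1) by (apply pow_le_one; lra).
  pose proof (pow_le_pow_le_one dl 2 16 ltac:(lra) ltac:(lia)).
  assert (0 <= dl ^ 2) by (apply pow_le; lra). assert (0 <= dl ^ 16) by (apply pow_le; lra).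
  (* both bounds come from wt y * chi * dl * psi^4 <= spot * psi^4 <= 40 chi / dl *)
  assert (Hw : wt y * psi y ^ 4 * dl ^ 2 <= 40).
  { apply Rmult_le_reg_r with chi; [lra|].
    apply Rmult_le_reg_r with (/ dl); [apply Rinv_0_lt_compat; lra|].
    replace (wt y * psi y ^ 4 * dl ^ 2 * chi * / dl) with (wt y * (chi * dl) * psi y ^ 4) by (field; lra).
    replace (40 * chi * / dl) with (40 * chi / dl) by reflexivity.
    eapply Rle_trans; [|exact HZs]. apply Rmult_le_compat_r; lra. }
  split.
  - assert (Hk : Kcut * psi y ^ 4 <= 40 * chi).
    { apply Rle_trans with (chi * wt y * dl ^ 5 * psi y ^ 4); [apply Rmult_le_compat_r; lra|].
      pose proof (pow_le_pow_le_one dl 2 5 ltac:(lra) ltac:(lia)).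
      replace (chi * wt y * dl ^ 5 * psi y ^ 4) with (chi * dl ^ 5 * (wt y * psi y ^ 4)) by ring.
      apply Rle_trans with (chi * dl ^ 2 * (wt y * psi y ^ 4)).
      - apply Rmult_le_compat_r; [apply Rmult_le_pos; lra|]. apply Rmult_le_compat_l; lra.
      - replace (chi * dl ^ 2 * (wt y * psi y ^ 4)) with (chi * (wt y * psi y ^ 4 * dl ^ 2)) by ring.
        assert (chi * (wt y * psi y ^ 4 * dl ^ 2) <= chi * 40) by (apply Rmult_le_compat_l; lra).
        lra. }
    unfold Kcut in Hk.
    assert (psi y ^ 4 * dl ^ 16 <= psi y ^ 4) by (rewrite <- (Rmult_1_r (psi y ^ 4)) at 2;
      apply Rmult_le_compat_l; lra).
    lra.
  - replace (wt y * psi y ^ 4 * dl ^ 16) with (wt y * psi y ^ 4 * dl ^ 2 * dl ^ 14) by ring.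
    pose proof (pow_le_one dl 14 ltac:(lra)). assert (0 <= dl ^ 14) by (apply pow_le; lra).
    assert (0 <= wt y * psi y ^ 4 * dl ^ 2) by (apply Rmult_le_pos; [apply Rmult_le_pos|]; lra).
    assert (wt y * psi y ^ 4 * dl ^ 2 * dl ^ 14 <= 40 * 1) by (apply Rmult_le_compat; lra).
    lra.
Qed.

Lemma energy_xcut_sq_le : energy c2 chi psi dpsi xcut ^ 2 <= Kcut / dl ^ 5 * (40 * chi / dl).
Proof.
  destruct xcut_facts as [Hx [Hpx _]].
  assert (Hc5 : 0 < chi * dl ^ 5) by (unfold Kcut in large; lra).
  pose proof (pot_bounds xcut ltac:(lra)).
  assert (Hs : 0 < spot c2 chi xcut) by (unfold spot; apply Rmult_lt_0_compat; [apply wt_pos|]; nra).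
  assert (Hsb : spot c2 chi xcut <= Kcut / dl ^ 5).
  { unfold spot. rewrite Hpx.
    replace (Kcut / dl ^ 5) with (Kcut / (chi * dl ^ 5) * chi) by (field; lra).
    apply Rmult_le_compat_l; [apply Rdiv_le_0_compat; [unfold Kcut; lra|lra]|lra]. }
  rewrite energy_eq by lra.
  replace ((spot c2 chi xcut * ampl2 c2 chi psi dpsi xcut) ^ 2)
    with (spot c2 chi xcut * zfun c2 chi psi dpsi xcut) by (unfold zfun; ring).
  apply Rmult_le_compat; [lra|apply (yfun_comparable_on_xcut xcut); lra|lra|].
  apply zfun_le. lra.
Qed.

Lemma near_one_facts :
  xcut <= 1 - 1 / (4 * chi) < 1 /\ dl / 4 <= spot c2 chi (1 - 1 / (4 * chi)).
Proof.
  destruct xcut_facts as [Hx [_ Hx1]].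
  assert (Hc5 : 0 < chi * dl ^ 5) by (unfold Kcut in large; lra).
  pose proof (pow_le_one dl 5 ltac:(lra)).
  assert (Hchi2 : 2 * Kcut <= chi).
  { assert (chi * dl ^ 5 <= chi * 1) by (apply Rmult_le_compat_l; lra). lra. }
  set (x1 := 1 - 1 / (4 * chi)).
  assert (Hq : 0 < 1 / (4 * chi) <= 1 / 80000).
  { unfold Kcut in Hchi2. split; [apply Rdiv_lt_0_compat; lra|].
    unfold Rdiv. rewrite !Rmult_1_l. apply Rinv_le_contravar; lra. }
  split; [split|].
  - assert (1 / (4 * chi) <= Kcut / (chi * dl ^ 5) / 2); [|unfold x1; lra].
    apply Rmult_le_reg_r with (4 * chi * dl ^ 5); [lra|].
    replace (1 / (4 * chi) * (4 * chi * dl ^ 5)) with (dl ^ 5) by (field; lra).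
    replace (Kcut / (chi * dl ^ 5) / 2 * (4 * chi * dl ^ 5)) with (2 * Kcut) by (field; lra).
    unfold Kcut. lra.
  - unfold x1. lra.
  - pose proof (pot_bounds x1 ltac:(unfold x1; lra)).
    assert (1 / (4 * chi) <= wt x1).
    { unfold wt. replace (1 - x1 ^ 2) with ((1 - x1) * (1 + x1)) by ring.
      replace (1 - x1) with (1 / (4 * chi)) by (unfold x1; ring).
      rewrite <- (Rmult_1_r (1 / (4 * chi))) at 1. apply Rmult_le_compat_l; [lra|unfold x1; lra]. }
    apply Rle_trans with (1 / (4 * chi) * (chi * dl)); [right; field; lra|].
    unfold spot. apply Rmult_le_compat; nra.
Qed.

(* Both the energy s psi^2 + u^2 and s decrease on [xcut, 1). *)
Lemma psi_sq_le_before_near_one z : xcut <= z <= 1 - 1 / (4 * chi) ->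
  psi z ^ 2 <= energy c2 chi psi dpsi xcut / (dl / 4).
Proof.
  intros Hz. destruct near_one_facts as [Hx1 Hs1].
  assert (HEz : energy c2 chi psi dpsi z <= energy c2 chi psi dpsi xcut).
  { apply (le_of_derive_nonpos _ (fun t => dspot c2 chi t * psi t ^ 2)); [lra| |].
    - intros t Ht. apply (der_energy c2 chi psi dpsi d2psi ode). destruct xcut_facts. lra.
    - intros t Ht. destruct xcut_facts. pose proof (dspot_bounds t ltac:(lra)).
      pose proof (pow2_ge_0 (psi t)). nra. }
  assert (Hsz : spot c2 chi (1 - 1 / (4 * chi)) <= spot c2 chi z).
  { apply (le_of_derive_nonpos (spot c2 chi) (dspot c2 chi)); [lra|intros; apply der_spot|].
    intros t Ht. destruct xcut_facts. apply dspot_bounds. lra. }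
  assert (spot c2 chi z * psi z ^ 2 <= energy c2 chi psi dpsi xcut).
  { eapply Rle_trans; [|exact HEz]. unfold energy. pose proof (pow2_ge_0 (flux dpsi z)). lra. }
  apply Rmult_le_reg_r with (dl / 4); [lra|]. unfold Rdiv. rewrite Rmult_assoc, Rinv_l by lra.
  pose proof (pow2_ge_0 (psi z)). nra.
Qed.

Hypothesis psi_cont : forall x, 0 <= x <= 1 -> continuity_pt psi x.

Lemma psi_sq_le_exterior y : xcut <= y <= 1 ->
  psi y ^ 2 <= 4 * (energy c2 chi psi dpsi xcut / (dl / 4)).
Proof.
  intros Hy. destruct near_one_facts as [Hx1 _].
  pose proof (psi_sq_le_before_near_one xcut ltac:(lra)).
  pose proof (pow2_ge_0 (psi xcut)).
  destruct (Rle_lt_dec y (1 - 1 / (4 * chi))) as [Hyx1|Hyx1].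
  - pose proof (psi_sq_le_before_near_one y ltac:(lra)). lra.
  - pose proof (psi_sq_le_before_near_one (1 - 1 / (4 * chi)) ltac:(lra)).
    set (x1 := 1 - 1 / (4 * chi)) in *.
    assert (Hcx : 2 * chi * (1 - x1) <= 1/2) by (unfold x1; right; field; lra).
    pose proof (Rabs_psi_le_near_one c2 chi psi dpsi d2psi ode c2_bounds_of_regime psi_cont x1
      ltac:(destruct xcut_facts; lra) Hcx y ltac:(lra)) as He.
    pose proof (pow_maj_Rabs _ _ 2 He) as Hsq.
    replace ((2 * Rabs (psi x1)) ^ 2) with (4 * psi x1 ^ 2) in Hsq
      by (rewrite <- (pow2_abs (psi x1)); ring).
    lra.
Qed.

Lemma psi_pow4_le_exterior y : xcut <= y <= 1 ->
  psi y ^ 4 * dl ^ 16 <= 10000 ^ 4 * chi /\ wt y * psi y ^ 4 * dl ^ 16 <= 10000 ^ 4.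
Proof.
  intros Hy. destruct xcut_facts as [Hx [Hpx _]].
  assert (Hc5 : 0 < chi * dl ^ 5) by (unfold Kcut in large; lra).
  pose proof (psi_sq_le_exterior y Hy) as Hy2. pose proof energy_xcut_sq_le as HE.
  set (E0 := energy c2 chi psi dpsi xcut) in *.
  assert (Hd16 : dl ^ 16 = dl ^ 8 * dl ^ 8) by ring.
  assert (Hd8 : 0 < dl ^ 8) by (apply pow_lt; lra).
  (* psi^4 <= (16 E0 / dl)^2 <= 256 Kcut * 40 chi / dl^8 *)
  assert (Hy4 : psi y ^ 4 * dl ^ 8 <= 10240 * Kcut * chi).
  { assert (psi y ^ 4 <= (4 * (E0 / (dl / 4))) ^ 2).
    { replace (psi y ^ 4) with ((psi y ^ 2) ^ 2) by ring. apply pow_incr.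
      split; [apply pow2_ge_0|exact Hy2]. }
    replace ((4 * (E0 / (dl / 4))) ^ 2) with (256 * E0 ^ 2 / dl ^ 2) in H by (field; lra).
    apply Rle_trans with (256 * E0 ^ 2 / dl ^ 2 * dl ^ 8); [apply Rmult_le_compat_r; lra|].
    replace (256 * E0 ^ 2 / dl ^ 2 * dl ^ 8) with (256 * dl ^ 6 * E0 ^ 2) by (field; lra).
    apply Rle_trans with (256 * dl ^ 6 * (Kcut / dl ^ 5 * (40 * chi / dl))).
    - apply Rmult_le_compat_l; [apply Rmult_le_pos; [lra|apply pow_le; lra]|exact HE].
    - right. field. lra. }
  assert (H4 : 0 <= psi y ^ 4) by (replace (psi y ^ 4) with ((psi y ^ 2) ^ 2) by ring; apply pow2_ge_0).
  assert (Hd8le : dl ^ 8 <= 1) by (apply pow_le_one; lra).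
  split.
  - rewrite Hd16, <- Rmult_assoc.
    apply Rle_trans with (10240 * Kcut * chi * dl ^ 8); [apply Rmult_le_compat_r; lra|].
    unfold Kcut. nra.
  - assert (Hw : wt y <= Kcut / (chi * dl ^ 5)) by (rewrite <- Hpx; unfold wt; nra).
    assert (0 <= wt y) by (unfold wt; nra).
    apply Rle_trans with (Kcut / (chi * dl ^ 5) * (psi y ^ 4 * dl ^ 8) * dl ^ 8).
    + rewrite Hd16. replace (wt y * psi y ^ 4 * (dl ^ 8 * dl ^ 8))
        with (wt y * (psi y ^ 4 * dl ^ 8) * dl ^ 8) by ring.
      apply Rmult_le_compat_r; [lra|]. apply Rmult_le_compat_r; [nra|exact Hw].
    + apply Rle_trans with (Kcut / (chi * dl ^ 5) * (10240 * Kcut * chi) * dl ^ 8).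
      * apply Rmult_le_compat_r; [lra|]. apply Rmult_le_compat_l; [|exact Hy4].
        apply Rdiv_le_0_compat; [unfold Kcut; lra|lra].
      * replace (Kcut / (chi * dl ^ 5) * (10240 * Kcut * chi) * dl ^ 8)
          with (10240 * Kcut ^ 2 * dl ^ 3) by (field; lra).
        pose proof (pow_le_one dl 3 ltac:(lra)). assert (0 <= dl ^ 3) by (apply pow_le; lra).
        unfold Kcut. nra.
Qed.

End Regime.

Lemma pow4_bounds_of_small_regime chi dl a w : 0 < chi -> 0 < dl <= 1 ->
  chi * dl ^ 5 < 2 * Kcut -> a ^ 2 <= 64 * chi -> 0 <= w <= 1 ->
  a ^ 4 * dl ^ 16 <= 10000 ^ 4 * chi /\ w * a ^ 4 * dl ^ 16 <= 10000 ^ 4.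
Proof.
  intros Hchi Hdl Hsmall Ha Hw. unfold Kcut in Hsmall.
  assert (Ha4 : a ^ 4 <= 4096 * chi ^ 2).
  { replace (a ^ 4) with ((a ^ 2) ^ 2) by ring. replace (4096 * chi ^ 2) with ((64 * chi) ^ 2) by ring.
    apply pow_incr. split; [apply pow2_ge_0|exact Ha]. }
  assert (0 <= a ^ 4) by (replace (a ^ 4) with ((a ^ 2) ^ 2) by ring; apply pow2_ge_0).
  pose proof (pow_le_pow_le_one dl 5 16 ltac:(lra) ltac:(lia)).
  pose proof (pow_le_pow_le_one dl 10 16 ltac:(lra) ltac:(lia)).
  assert (0 <= dl ^ 16) by (apply pow_le; lra). assert (0 <= dl ^ 5) by (apply pow_le; lra).
  assert (A1 : a ^ 4 * dl ^ 16 <= 4096 * chi ^ 2 * dl ^ 16) by (apply Rmult_le_compat_r; lra).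
  assert (Hcd : chi * dl ^ 16 <= 40000).
  { assert (chi * dl ^ 16 <= chi * dl ^ 5) by (apply Rmult_le_compat_l; lra). lra. }
  split.
  - eapply Rle_trans; [exact A1|].
    replace (4096 * chi ^ 2 * dl ^ 16) with (4096 * chi * (chi * dl ^ 16)) by ring.
    assert (4096 * chi * (chi * dl ^ 16) <= 4096 * chi * 40000) by (apply Rmult_le_compat_l; lra).
    lra.
  - assert (w * a ^ 4 * dl ^ 16 <= 1 * (a ^ 4 * dl ^ 16)).
    { rewrite Rmult_assoc. apply Rmult_le_compat_r; [apply Rmult_le_pos|]; lra. }
    assert (chi ^ 2 * dl ^ 16 <= 40000 ^ 2).
    { apply Rle_trans with (chi ^ 2 * dl ^ 10); [apply Rmult_le_compat_l; [apply pow2_ge_0|lra]|].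
      replace (chi ^ 2 * dl ^ 10) with ((chi * dl ^ 5) ^ 2) by ring. apply pow_incr.
      split; [apply Rmult_le_pos|]; lra. }
    lra.
Qed.

Lemma Rabs_sign eps : eps = 1 \/ eps = -1 -> Rabs eps = 1.
Proof. intros [-> | ->]; unfold Rabs; destruct (Rcase_abs _); lra. Qed.

Lemma pswf_pow4_bounds_nonneg c2 chi dl psi dpsi d2psi eps :
  pswf_ode c2 chi psi dpsi d2psi -> 0 < chi -> 0 < dl <= 1 -> c2 = chi * (1 - dl) ->
  (forall x, -1 <= x <= 1 -> continuity_pt psi x) ->
  (exists pr : Riemann_integrable (fun x => psi x ^ 2) (-1) 1, RiemannInt pr = 1) ->
  (eps = 1 \/ eps = -1) -> (forall x, -1 <= x <= 1 -> psi (- x) = eps * psi x) ->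
  forall y, 0 <= y <= 1 ->
  psi y ^ 4 * dl ^ 16 <= 10000 ^ 4 * chi /\ wt y * psi y ^ 4 * dl ^ 16 <= 10000 ^ 4.
Proof.
  intros ode Hchi Hdl Hc2 Hcont Hnorm He Hpar y Hy.
  pose proof (c2_bounds_of_regime c2 chi dl Hchi Hdl Hc2) as Hc.
  assert (Hcont01 : forall x, 0 <= x <= 1 -> continuity_pt psi x) by (intros; apply Hcont; lra).
  destruct (mass_primitive_exists psi Hcont Hnorm) as [P mass].
  assert (Hsym : forall x, -1 <= x <= 1 -> Rabs (psi (- x)) = Rabs (psi x)).
  { intros x Hx. rewrite Hpar, Rabs_mult by exact Hx.
    rewrite (Rabs_sign eps He). ring. }
  destruct (Rabs_max_on_unit_interval psi Hcont Hsym) as [tm [Htm HM]].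
  destruct (Rle_lt_dec (2 * Kcut) (chi * dl ^ 5)) as [Hlarge|Hsmall].
  - destruct (Rle_lt_dec y (xcut chi dl)).
    + apply (psi_pow4_le_interior c2 chi dl Hchi Hdl Hc2 psi dpsi d2psi Hlarge ode P mass). lra.
    + apply (psi_pow4_le_exterior c2 chi dl Hchi Hdl Hc2 psi dpsi d2psi Hlarge ode P mass Hcont01).
      lra.
  - pose proof (one_le_two_sup_sq psi P mass _ HM) as HM2.
    assert (HM0 : 0 < Rabs (psi tm)) by (pose proof (Rabs_pos (psi tm)); nra).
    assert (HM01 : forall x, 0 <= x <= 1 -> Rabs (psi x) <= Rabs (psi tm)) by (intros; apply HM; lra).
    pose proof (chi_ge_quarter c2 chi psi dpsi d2psi eps tm ode Hc Hcont01 He Hpar Htm HM01 HM0).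
    pose proof (sup_sq_le c2 chi psi dpsi d2psi tm ode Hc Hcont01 Htm HM01 P mass H) as Hsup.
    apply (pow4_bounds_of_small_regime chi dl (psi y) (wt y) Hchi Hdl Hsmall); [|unfold wt; nra].
    eapply Rle_trans; [|exact Hsup]. apply pow_maj_Rabs. apply HM. lra.
Qed.

Lemma pswf_pow4_bounds c2 chi dl psi dpsi d2psi eps :
  pswf_ode c2 chi psi dpsi d2psi -> 0 < chi -> 0 < dl <= 1 -> c2 = chi * (1 - dl) ->
  (forall x, -1 <= x <= 1 -> continuity_pt psi x) ->
  (exists pr : Riemann_integrable (fun x => psi x ^ 2) (-1) 1, RiemannInt pr = 1) ->
  (eps = 1 \/ eps = -1) -> (forall x, -1 <= x <= 1 -> psi (- x) = eps * psi x) ->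
  forall x, -1 <= x <= 1 ->
  psi x ^ 4 * dl ^ 16 <= 10000 ^ 4 * chi /\ wt x * psi x ^ 4 * dl ^ 16 <= 10000 ^ 4.
Proof.
  intros ode Hchi Hdl Hc2 Hcont Hnorm He Hpar x Hx.
  destruct (Rle_lt_dec 0 x).
  - exact (pswf_pow4_bounds_nonneg c2 chi dl psi dpsi d2psi eps ode Hchi Hdl Hc2 Hcont Hnorm He Hpar
             x ltac:(lra)).
  - destruct (pswf_pow4_bounds_nonneg c2 chi dl psi dpsi d2psi eps ode Hchi Hdl Hc2 Hcont Hnorm He
      Hpar (- x) ltac:(lra)) as [B1 B2].
    assert (Hp4 : psi (- x) ^ 4 = psi x ^ 4).
    { rewrite Hpar by lra. destruct He as [-> | ->]; ring. }
    replace (wt (- x)) with (wt x) in B2 by (unfold wt; ring).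
    rewrite Hp4 in B1, B2. split; assumption.
Qed.

Lemma pow_neg1_cases n : (-1) ^ n = 1 \/ (-1) ^ n = -1.
Proof. induction n as [|n [E|E]]; simpl; [left|right|left]; rewrite ?E; ring. Qed.

Lemma le_of_pow4_le a r : 0 <= a -> 0 <= r -> a ^ 4 <= r ^ 4 -> a <= r.
Proof.
  intros Ha Hr H. destruct (Rle_lt_dec a r) as [|Hlt]; [assumption|].
  assert (r * r < a * a) by (apply Rmult_le_0_lt_compat; lra).
  assert (r * r * (r * r) < a * a * (a * a)) by (apply Rmult_le_0_lt_compat; nra).
  nra.
Qed.

Lemma pow4_sqrt_sqrt z : 0 <= z -> sqrt (sqrt z) ^ 4 = z.
Proof.
  intros Hz.
  replace (sqrt (sqrt z) ^ 4) with ((sqrt (sqrt z) * sqrt (sqrt z)) * (sqrt (sqrt z) * sqrt (sqrt z)))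
    by ring.
  rewrite sqrt_sqrt by apply sqrt_pos. apply sqrt_sqrt, Hz.
Qed.

Lemma Rabs_le_of_pow4_mul_le a b d C : 0 < d -> 0 <= b -> 0 <= C ->
  a ^ 4 * d ^ 16 <= C ^ 4 * b -> Rabs a <= C / d ^ 4 * sqrt (sqrt b).
Proof.
  intros Hd Hb HC H.
  assert (Hd4 : 0 < d ^ 4) by (apply pow_lt; lra).
  apply le_of_pow4_le; [apply Rabs_pos|apply Rmult_le_pos; [apply Rdiv_le_0_compat; lra|apply sqrt_pos]|].
  rewrite Rpow_mult_distr, pow4_sqrt_sqrt by exact Hb.
  replace (Rabs a ^ 4) with ((Rabs a ^ 2) ^ 2) by ring. rewrite pow2_abs.
  apply Rmult_le_reg_r with ((d ^ 4) ^ 4); [apply pow_lt; lra|].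
  replace ((C / d ^ 4) ^ 4 * b * (d ^ 4) ^ 4) with (C ^ 4 * b) by (field; lra).
  replace ((a ^ 2) ^ 2 * (d ^ 4) ^ 4) with (a ^ 4 * d ^ 16) by ring. exact H.
Qed.

Theorem corollary1 :
  exists C : R, 0 < C /\
    forall (c : R) (n : nat) (chi : R) (psi : R -> R),
      0 <= c ->
      is_chi c n chi ->
      is_pswf c n chi psi ->
      0 < chi ->
      c ^ 2 / chi < 1 ->
      forall x, -1 <= x <= 1 ->
        Rabs (psi x) <= C / (1 - c ^ 2 / chi) ^ 4 * sqrt (sqrt chi) /\
        sqrt (sqrt (1 - x ^ 2)) * Rabs (psi x) <= C / (1 - c ^ 2 / chi) ^ 4.
Proof.
  exists 10000. split; [lra|].
  intros c n chi psi _ _ [[dpsi [d2psi ode]] [Hcont [Hnorm [Hpar _]]]] Hchi Hq x Hx.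
  set (dl := 1 - c ^ 2 / chi).
  assert (Hdl : 0 < dl <= 1) by (pose proof (Rdiv_le_0_compat _ _ (pow2_ge_0 c) Hchi); unfold dl; lra).
  assert (Hc2 : c ^ 2 = chi * (1 - dl)) by (unfold dl; field; lra).
  destruct (pswf_pow4_bounds (c ^ 2) chi dl psi dpsi d2psi ((-1) ^ n) ode Hchi Hdl Hc2 Hcont Hnorm
    (pow_neg1_cases n) Hpar x Hx) as [B1 B2].
  split.
  - apply Rabs_le_of_pow4_mul_le; [lra|lra|lra|exact B1].
  - assert (Hw : 0 <= 1 - x ^ 2) by nra.
    pose proof (Rabs_le_of_pow4_mul_le (sqrt (sqrt (1 - x ^ 2)) * psi x) 1 dl 10000) as H.
    rewrite sqrt_1, sqrt_1, !Rmult_1_r, Rabs_mult, (Rabs_right (sqrt _)) in H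
      by apply Rle_ge, sqrt_pos.
    apply H; [lra|lra|lra|]. rewrite Rpow_mult_distr, pow4_sqrt_sqrt by exact Hw. exact B2.
Qed.
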